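(* For every continuously differentiable $h:\mathbb{R}\to(0,\infty)$, $$T\ \ge\ \mathrm{sech}^2\left\{\frac12\int_{-\infty}^{\infty}\left[\,\big|(\ln h)'\big|+\frac{|k^2-h^2|}{h}\right]\mathrm{d}x\right\}.$$
   Context: Standing setup: $k^2:\mathbb{R}\to\mathbb{R}$ is a piecewise continuous function (it may be negative somewhere) with $k^2(x)\to k_{\pm\infty}^2$ as $x\to\pm\infty$, where $k_{\pm\infty}>0$ and $k^2-k_{\pm\infty}^2$ is integrable near $\pm\infty$. For the equation $u''+k^2(x)u=0$ there is a solution with $u(x)=e^{ik_{-\infty}x}+r\,e^{-ik_{-\infty}x}+o(1)$ as $x\to-\infty$ and $u(x)=\tau\,e^{ik_{+\infty}x}+o(1)$ as $x\to+\infty$; the transmission probability is $T=(k_{+\infty}/k_{-\infty})|\tau|^2$. Here $\mathrm{sech}=1/\cosh$, and if the integral equals $+\infty$ the bound is read as the trivial statement $T\ge 0$. *)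

From Stdlib Require Import Reals Lra List.
Open Scope R_scope.

Definition has_left_limit (f : R -> R) (x : R) : Prop :=
  exists L, forall eps, 0 < eps -> exists delta, 0 < delta /\
    forall y, x - delta < y < x -> Rabs (f y - L) < eps.

Definition has_right_limit (f : R -> R) (x : R) : Prop :=
  exists L, forall eps, 0 < eps -> exists delta, 0 < delta /\
    forall y, x < y < x + delta -> Rabs (f y - L) < eps.

Definition piecewise_continuous (f : R -> R) : Prop :=
  forall a b, a < b -> exists l : list R,
    (forall x, a <= x <= b -> ~ In x l -> continuity_pt f x) /\
    (forall x, In x l -> has_left_limit f x /\ has_right_limit f x).

Definition integral_on (f : R -> R) (a b v : R) : Prop :=
  exists pr : Riemann_integrable f a b, RiemannInt pr = v.

Definition integrable_near_pinf (f : R -> R) : Prop :=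
  exists M C, forall b v, M <= b -> integral_on (fun x => Rabs (f x)) M b v -> v <= C.

Definition integrable_near_minf (f : R -> R) : Prop :=
  exists M C, forall a v, a <= M -> integral_on (fun x => Rabs (f x)) a M v -> v <= C.

(* Improper integral over R of a nonnegative function, with finite value I:
   I is the supremum of the integrals over compact intervals. *)
Definition improper_integral_R (f : R -> R) (I : R) : Prop :=
  is_lub (fun v => exists a b, a <= b /\ integral_on f a b v) I.

Definition lim_pinf (f : R -> R) (L : R) : Prop :=
  forall eps, 0 < eps -> exists M, forall x, M < x -> Rabs (f x - L) < eps.

Definition lim_minf (f : R -> R) (L : R) : Prop :=
  forall eps, 0 < eps -> exists M, forall x, x < M -> Rabs (f x - L) < eps.

(* Real solutions of u'' + q u = 0 with q piecewise continuous:
   u is C^1 and u' is differentiable with derivative -q u wherever q is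
   continuous (equivalently u' is the integral of -q u). *)
Definition is_solution (q u : R -> R) : Prop :=
  exists u' : R -> R,
    (forall x, derivable_pt_lim u x (u' x)) /\ continuity u' /\
    (forall x, continuity_pt q x -> derivable_pt_lim u' x (- q x * u x)).

Definition sech (x : R) : R := / cosh x.

(* Write the scattering solution as u = ur + i ui (derivative u' = ur' + i ui').
   1. Asymptotics.  Since k^2 - k_{+-oo}^2 is integrable near +-oo, variation of
      constants shows that u' is asymptotic to the derivative of the plane waves
      to which u is asymptotic.
   2. Wronskian.  W = ur ui' - ui ur' = Im (conj u u') is constant; evaluated at
      -oo and +oo it gives W = km (1 - |r|^2) = kp |tau|^2, so T = 1 - |r|^2.
   3. Energy.  E = (h |u|^2 + |u'|^2 / h) / 2 satisfies E^2 = F^2 + D^2 + W^2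
      with the flux F = Re (conj u u'), and |E'| <= rate * sqrt (E^2 - W^2) for
      rate = |h'/h| + |k^2 - h^2| / h.  Hence ln (E + sqrt (E^2 - W^2)) changes
      by at most the integral I of the rate (E is shifted by eps > 0 to keep
      the square root away from 0).
   4. Ends.  Far left the flux peaks at 2 km |r|, where E + sqrt (E^2 - W^2)
      is at least km (1 + |r|)^2; far right, at points where the integrable rate
      is small, h is close to kp and E to kp |tau|^2 = W.  Thus
      km (1 + |r|)^2 <= e^I km (1 - |r|^2), i.e. (1 + |r|) / (1 - |r|) <= e^I,
      which is 1 - |r|^2 >= sech^2 (I/2). *)

From Stdlib Require Import Reals Lra Lia Psatz List.
From Stdlib Require Import Classical ClassicalEpsilon FunctionalExtensionality.
Open Scope R_scope.

(* Pointwise forms of the differentiation and continuity rules.  The library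
   states them for the combinators [(f + g)%F], [(f * g)%F], ...; these
   versions apply directly to goals about [fun t => f t + g t], etc. *)

Lemma deriv_eq f x a b : derivable_pt_lim f x a -> a = b -> derivable_pt_lim f x b.
Proof. now intros H ->. Qed.
Lemma deriv_plus f g x a b : derivable_pt_lim f x a -> derivable_pt_lim g x b ->
  derivable_pt_lim (fun t => f t + g t) x (a + b).
Proof. exact (derivable_pt_lim_plus f g x a b). Qed.
Lemma deriv_minus f g x a b : derivable_pt_lim f x a -> derivable_pt_lim g x b ->
  derivable_pt_lim (fun t => f t - g t) x (a - b).
Proof. exact (derivable_pt_lim_minus f g x a b). Qed.
Lemma deriv_mult f g x a b : derivable_pt_lim f x a -> derivable_pt_lim g x b ->
  derivable_pt_lim (fun t => f t * g t) x (a * g x + f x * b).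
Proof. exact (derivable_pt_lim_mult f g x a b). Qed.
Lemma deriv_const c x : derivable_pt_lim (fun _ => c) x 0.
Proof. exact (derivable_pt_lim_const c x). Qed.
Lemma deriv_id x : derivable_pt_lim (fun t => t) x 1.
Proof. exact (derivable_pt_lim_id x). Qed.
Lemma deriv_div f g x a b : derivable_pt_lim f x a -> derivable_pt_lim g x b -> g x <> 0 ->
  derivable_pt_lim (fun t => f t / g t) x ((a * g x - b * f x) / Rsqr (g x)).
Proof. exact (derivable_pt_lim_div f g x a b). Qed.
Lemma deriv_comp f g x a b : derivable_pt_lim f x a -> derivable_pt_lim g (f x) b ->
  derivable_pt_lim (fun t => g (f t)) x (b * a).
Proof. exact (derivable_pt_lim_comp f g x a b). Qed.
Lemma deriv_ln f x a : derivable_pt_lim f x a -> 0 < f x ->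
  derivable_pt_lim (fun t => ln (f t)) x (/ f x * a).
Proof. intros. apply deriv_comp; auto. now apply derivable_pt_lim_ln. Qed.
Lemma deriv_sqrt f x a : derivable_pt_lim f x a -> 0 < f x ->
  derivable_pt_lim (fun t => sqrt (f t)) x (/ (2 * sqrt (f x)) * a).
Proof. intros. apply deriv_comp; auto. now apply derivable_pt_lim_sqrt. Qed.
Lemma deriv_cos f x a : derivable_pt_lim f x a ->
  derivable_pt_lim (fun t => cos (f t)) x (- sin (f x) * a).
Proof. intros. apply deriv_comp; auto. apply derivable_pt_lim_cos. Qed.
Lemma deriv_sin f x a : derivable_pt_lim f x a ->
  derivable_pt_lim (fun t => sin (f t)) x (cos (f x) * a).
Proof. intros. apply deriv_comp; auto. apply derivable_pt_lim_sin. Qed.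
Lemma deriv_cont f x a : derivable_pt_lim f x a -> continuity_pt f x.
Proof. intros. apply derivable_continuous_pt. now exists a. Qed.

Lemma cont_plus f g x : continuity_pt f x -> continuity_pt g x ->
  continuity_pt (fun t => f t + g t) x.
Proof. exact (continuity_pt_plus f g x). Qed.
Lemma cont_minus f g x : continuity_pt f x -> continuity_pt g x ->
  continuity_pt (fun t => f t - g t) x.
Proof. exact (continuity_pt_minus f g x). Qed.
Lemma cont_mult f g x : continuity_pt f x -> continuity_pt g x ->
  continuity_pt (fun t => f t * g t) x.
Proof. exact (continuity_pt_mult f g x). Qed.
Lemma cont_const c x : continuity_pt (fun _ => c) x.
Proof. apply continuity_pt_const. now intros a b. Qed.
Lemma cont_inv f x : continuity_pt f x -> f x <> 0 -> continuity_pt (fun t => / f t) x.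
Proof. exact (continuity_pt_inv f x). Qed.
Lemma cont_comp f g x : continuity_pt f x -> continuity_pt g (f x) ->
  continuity_pt (fun t => g (f t)) x.
Proof. exact (continuity_pt_comp f g x). Qed.
Lemma cont_div f g x : continuity_pt f x -> continuity_pt g x -> g x <> 0 ->
  continuity_pt (fun t => f t / g t) x.
Proof. intros. apply cont_mult; auto. now apply cont_inv. Qed.
Lemma cont_id x : continuity_pt (fun t => t) x.
Proof. exact (deriv_cont _ _ _ (deriv_id x)). Qed.
Lemma cont_ln f x : continuity_pt f x -> 0 < f x -> continuity_pt (fun t => ln (f t)) x.
Proof.
  intros. apply cont_comp; auto. apply (deriv_cont _ _ (/ f x)).
  now apply derivable_pt_lim_ln.
Qed.
Lemma cont_sqrt f x : continuity_pt f x -> 0 <= f x -> continuity_pt (fun t => sqrt (f t)) x.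
Proof. intros. apply cont_comp; auto. now apply continuity_pt_sqrt. Qed.
Lemma cont_abs f x : continuity_pt f x -> continuity_pt (fun t => Rabs (f t)) x.
Proof. intros. apply cont_comp; auto. apply Rcontinuity_abs. Qed.
Lemma cont_pow f x n : continuity_pt f x -> continuity_pt (fun t => f t ^ n) x.
Proof. intros. induction n; simpl. apply cont_const. now apply cont_mult. Qed.

Lemma Rabs_le_bounds x y : Rabs x <= y -> - y <= x <= y.
Proof. unfold Rabs; destruct (Rcase_abs x); intros; lra. Qed.

(* One-sided limits expressed through [limit1_in], so that the library's
   limit algebra ([limit_plus], [limit_mul], ...) applies to them. *)
Definition right_lim f c L := limit1_in f (fun y => c < y) L c.
Definition left_lim f c L := limit1_in f (fun y => y < c) L c.

Lemma has_right_limit_iff f c : has_right_limit f c <-> exists L, right_lim f c L.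
Proof.
  unfold right_lim, limit1_in, limit_in; simpl; unfold Rdist.
  split; intros [L HL]; exists L; intros eps Heps;
    destruct (HL eps Heps) as [d [Hd H]]; exists d; split; auto.
  - intros y [Hy1 Hy2]. apply H. apply Rabs_def2 in Hy2. lra.
  - intros y Hy. apply H. split; [lra | apply Rabs_def1; lra].
Qed.

Lemma has_left_limit_iff f c : has_left_limit f c <-> exists L, left_lim f c L.
Proof.
  unfold left_lim, limit1_in, limit_in; simpl; unfold Rdist.
  split; intros [L HL]; exists L; intros eps Heps;
    destruct (HL eps Heps) as [d [Hd H]]; exists d; split; auto.
  - intros y [Hy1 Hy2]. apply H. apply Rabs_def2 in Hy2. lra.
  - intros y Hy. apply H. split; [lra | apply Rabs_def1; lra].
Qed.

Lemma cont_limit1_in f D c : continuity_pt f c -> (forall y, D y -> c <> y) ->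
  limit1_in f D (f c) c.
Proof.
  intros Hc HD eps Heps. destruct (Hc eps Heps) as [d [Hd H]]. exists d; split; auto.
  intros x [Hx1 Hx2]. apply H. repeat split; auto.
Qed.

Lemma cont_has_right_limit f c : continuity_pt f c -> has_right_limit f c.
Proof.
  intros H. apply has_right_limit_iff. exists (f c).
  apply cont_limit1_in; auto. intros; lra.
Qed.
Lemma cont_has_left_limit f c : continuity_pt f c -> has_left_limit f c.
Proof.
  intros H. apply has_left_limit_iff. exists (f c).
  apply cont_limit1_in; auto. intros; lra.
Qed.

Lemma limit_abs f D l x0 : limit1_in f D l x0 -> limit1_in (fun x => Rabs (f x)) D (Rabs l) x0.
Proof.
  intros H eps Heps. destruct (H eps Heps) as [d [Hd H1]]. exists d; split; auto.
  intros x Hx. eapply Rle_lt_trans. apply Rabs_triang_inv2. now apply H1.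
Qed.

(* Piecewise continuity is preserved by [g |-> |p| + |g - q| * s] with [p],
   [q], [s] continuous: this covers the integrands [|k^2 - c|] and
   [|h'/h| + |k^2 - h^2|/h] of the theorem. *)
Lemma pc_weighted_deviation (p q s g : R -> R) :
  continuity p -> continuity q -> continuity s -> piecewise_continuous g ->
  piecewise_continuous (fun x => Rabs (p x) + Rabs (g x - q x) * s x).
Proof.
  intros Hp Hq Hs Hg.
  assert (Hlim : forall D L c, (forall y, D y -> c <> y) -> limit1_in g D L c ->
    limit1_in (fun x => Rabs (p x) + Rabs (g x - q x) * s x) D
              (Rabs (p c) + Rabs (L - q c) * s c) c).
  { intros D L c HD H. apply limit_plus. apply limit_abs, cont_limit1_in; auto.
    apply limit_mul. apply limit_abs, limit_minus; auto. apply cont_limit1_in; auto.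
    apply cont_limit1_in; auto. }
  intros a b Hab. destruct (Hg a b Hab) as [l [H1 H2]]. exists l. split.
  - intros x Hx Hn. apply (Hlim (D_x no_cond x) (g x) x).
    + now intros y [_ Hy].
    + apply cont_limit1_in; [now apply H1 | now intros y [_ Hy]].
  - intros x Hx. destruct (H2 x Hx) as [Hl Hr]. split.
    + apply has_left_limit_iff in Hl as [L HL]. apply has_left_limit_iff.
      eexists. apply Hlim; eauto. intros; lra.
    + apply has_right_limit_iff in Hr as [L HL]. apply has_right_limit_iff.
      eexists. apply Hlim; eauto. intros; lra.
Qed.

Definition locally_bounded (f : R -> R) := forall t, exists d M, 0 < d /\
  forall y, t - d < y < t + d -> y <> t -> Rabs (f y) <= M.

Lemma pc_locally_bounded f : piecewise_continuous f -> locally_bounded f.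
Proof.
  intros Hpc t. destruct (Hpc (t - 1) (t + 1) ltac:(lra)) as [l [H1 H2]].
  assert (Hnear : forall y L, Rabs (f y - L) < 1 -> Rabs (f y) <= Rabs L + 1).
  { intros y L H. pose proof (Rabs_triang (f y - L) L) as T.
    replace (f y - L + L) with (f y) in T by ring. lra. }
  destruct (classic (In t l)) as [Hin|Hin].
  - destruct (H2 t Hin) as [[L1 HL1] [L2 HL2]].
    destruct (HL1 1 ltac:(lra)) as [d1 [Hd1 H3]].
    destruct (HL2 1 ltac:(lra)) as [d2 [Hd2 H4]].
    exists (Rmin d1 d2), (Rabs L1 + Rabs L2 + 1). split. now apply Rmin_pos.
    intros y Hy Hyt. pose proof (Rmin_l d1 d2). pose proof (Rmin_r d1 d2).
    pose proof (Rabs_pos L1). pose proof (Rabs_pos L2).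
    destruct (Rlt_dec y t).
    + assert (Rabs (f y) <= Rabs L1 + 1) by (apply Hnear, H3; lra). lra.
    + assert (Rabs (f y) <= Rabs L2 + 1) by (apply Hnear, H4; lra). lra.
  - assert (Hc : continuity_pt f t) by (apply H1; auto; lra).
    destruct (Hc 1 ltac:(lra)) as [d [Hd H3]].
    exists d, (Rabs (f t) + 1). split; auto. intros y Hy Hyt. apply Hnear, H3.
    split. split. exact I. auto. simpl; unfold Rdist. apply Rabs_def1; lra.
Qed.

Lemma pc_abs_deviation q c : piecewise_continuous q ->
  piecewise_continuous (fun x => Rabs (q x - c)).
Proof.
  intros H.
  replace (fun x => Rabs (q x - c)) with
    (fun x => Rabs ((fun _ => 0) x) + Rabs (q x - (fun _ => c) x) * (fun _ => 1) x).
  - apply pc_weighted_deviation; auto; intro; apply cont_const.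
  - apply functional_extensionality; intro. rewrite Rabs_R0. ring.
Qed.

Lemma integrable_open_ext f g a b : a < b -> (forall x, a < x < b -> f x = g x) ->
  Riemann_integrable g a b -> Riemann_integrable f a b.
Proof.
  intros Hab Hfg Hg eps. destruct (Hg eps) as [phi [psi [H1 H2]]].
  rewrite Rmin_left, Rmax_right in H1 by lra.
  set (ph := fun t => if Req_dec_T t a then f a else if Req_dec_T t b then f b else phi t).
  assert (Hst : IsStepFun ph a b).
  { destruct (pre phi) as [l [l0 Hc]]. exists l, l0.
    destruct Hc as [Ho [H0 [Hn [Hlen Hk]]]].
    rewrite Rmin_left in H0 by lra. rewrite Rmax_right in Hn by lra.
    split; [|split; [|split; [|split]]]; auto.
    rewrite Rmin_left by lra; auto. rewrite Rmax_right by lra; auto.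
    intros i Hi x Hx. rewrite <- (Hk i Hi x Hx). unfold open_interval in Hx.
    pose proof (proj1 (RList.RList_P6 l) Ho) as Hsorted.
    assert (RList.pos_Rl l 0 <= RList.pos_Rl l i) by (apply Hsorted; lia).
    assert (RList.pos_Rl l (S i) <= RList.pos_Rl l (pred (length l))) by (apply Hsorted; lia).
    unfold ph. destruct (Req_dec_T x a); [lra|]. destruct (Req_dec_T x b); [lra|]. auto. }
  exists (mkStepFun Hst), psi. split; auto.
  rewrite Rmin_left, Rmax_right by lra. intros t Ht. simpl. unfold ph.
  assert (Hpos : forall u, a <= u <= b -> 0 <= psi u).
  { intros u Hu. eapply Rle_trans. apply Rabs_pos. now apply H1. }
  destruct (Req_dec_T t a). { subst. rewrite Rminus_diag, Rabs_R0. apply Hpos; lra. }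
  destruct (Req_dec_T t b). { subst. rewrite Rminus_diag, Rabs_R0. apply Hpos; lra. }
  rewrite Hfg by lra. now apply H1.
Qed.

Lemma glued_continuous f a b La Lb : a < b -> (forall x, a < x < b -> continuity_pt f x) ->
  right_lim f a La -> left_lim f b Lb ->
  forall x, a <= x <= b ->
  continuity_pt (fun t => if Rle_dec t a then La else if Rle_dec b t then Lb else f t) x.
Proof.
  intros Hab Hc HLa HLb x Hx.
  unfold right_lim, left_lim, limit1_in, limit_in in HLa, HLb; simpl in HLa, HLb;
    unfold Rdist in HLa, HLb.
  destruct (Req_dec x a) as [->|Na]; [|destruct (Req_dec x b) as [->|Nb]].
  - intros eps Heps. destruct (HLa eps Heps) as [d [Hd H]]. exists (Rmin d (b - a)).
    split. apply Rmin_pos; lra. simpl; unfold Rdist. intros y [_ Hy].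
    pose proof (Rmin_l d (b - a)). pose proof (Rmin_r d (b - a)). apply Rabs_def2 in Hy.
    destruct (Rle_dec a a); [|lra]. destruct (Rle_dec y a).
    { rewrite Rminus_diag, Rabs_R0; auto. }
    destruct (Rle_dec b y); [lra|]. apply H. split; [lra | apply Rabs_def1; lra].
  - intros eps Heps. destruct (HLb eps Heps) as [d [Hd H]]. exists (Rmin d (b - a)).
    split. apply Rmin_pos; lra. simpl; unfold Rdist. intros y [_ Hy].
    pose proof (Rmin_l d (b - a)). pose proof (Rmin_r d (b - a)). apply Rabs_def2 in Hy.
    destruct (Rle_dec b a); [lra|]. destruct (Rle_dec b b); [|lra].
    destruct (Rle_dec y a); [lra|]. destruct (Rle_dec b y).
    { rewrite Rminus_diag, Rabs_R0; auto. }
    apply H. split; [lra | apply Rabs_def1; lra].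
  - apply continuity_pt_locally_ext with (f := f) (a := Rmin (x - a) (b - x)).
    + apply Rmin_pos; lra.
    + intros y Hy. unfold Rdist in Hy.
      pose proof (Rmin_l (x - a) (b - x)). pose proof (Rmin_r (x - a) (b - x)).
      apply Rabs_def2 in Hy.
      destruct (Rle_dec y a); [lra|]. destruct (Rle_dec b y); [lra|]. auto.
    + apply Hc; lra.
Qed.

Lemma integrable_interior_continuous f a b : a < b ->
  (forall x, a < x < b -> continuity_pt f x) ->
  has_right_limit f a -> has_left_limit f b -> inhabited (Riemann_integrable f a b).
Proof.
  intros Hab Hc Ha Hb.
  apply has_right_limit_iff in Ha as [La HLa]. apply has_left_limit_iff in Hb as [Lb HLb].
  constructor. eapply integrable_open_ext; [exact Hab | |].
  2: { apply continuity_implies_RiemannInt; [lra|]. apply (glued_continuous f a b La Lb); auto. }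
  intros x Hx. simpl. destruct (Rle_dec x a); [lra|]. destruct (Rle_dec b x); [lra|]. auto.
Qed.

Lemma integrable_off_list f l : forall a b, a < b ->
  (forall x, a < x < b -> ~ In x l -> continuity_pt f x) ->
  (forall x, In x l -> has_left_limit f x /\ has_right_limit f x) ->
  has_right_limit f a -> has_left_limit f b -> inhabited (Riemann_integrable f a b).
Proof.
  induction l as [|c l IH]; intros a b Hab Hc Hl Ha Hb.
  { apply integrable_interior_continuous; auto. }
  assert (Hl' : forall x, In x l -> has_left_limit f x /\ has_right_limit f x)
    by (intros; apply Hl; now right).
  assert (Hc' : forall a' b', a <= a' -> b' <= b -> ~ (a' < c < b') ->
    forall x, a' < x < b' -> ~ In x l -> continuity_pt f x).
  { intros a' b' H1 H2 H3 x Hx Hn. apply Hc; [lra|]. intros [E|E]; [subst; lra | auto]. }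
  destruct (Rlt_dec a c) as [Hac|Hac]; [destruct (Rlt_dec c b) as [Hcb|Hcb]|].
  - destruct (Hl c (or_introl eq_refl)) as [Hcl Hcr].
    destruct (IH a c Hac) as [R1]; auto. { apply Hc'; lra. }
    destruct (IH c b Hcb) as [R2]; auto. { apply Hc'; lra. }
    constructor. apply (RiemannInt_P21 (b := c)); auto; lra.
  - apply IH; auto. apply Hc'; lra.
  - apply IH; auto. apply Hc'; lra.
Qed.

Lemma pc_integrable f : piecewise_continuous f -> forall a b, inhabited (Riemann_integrable f a b).
Proof.
  intros Hpc.
  assert (Hlt : forall a b, a < b -> inhabited (Riemann_integrable f a b)).
  { intros a b H. destruct (Hpc a b H) as [l [H1 H2]]. apply (integrable_off_list f l); auto.
    - intros; apply H1; auto; lra.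
    - destruct (classic (In a l)). now apply H2. apply cont_has_right_limit, H1; auto; lra.
    - destruct (classic (In b l)). now apply H2. apply cont_has_left_limit, H1; auto; lra. }
  intros a b. destruct (Rtotal_order a b) as [H|[H|H]].
  - auto.
  - subst. constructor. apply RiemannInt_P7.
  - destruct (Hlt b a H) as [Hr]. constructor. now apply RiemannInt_P1.
Qed.

(* The Riemann integral of a function integrable on every interval, as a total
   function of the bounds (the integrability proof is chosen once and for all;
   by [RiemannInt_P5] the value does not depend on it). *)
Definition Int f (Hf : forall a b, inhabited (Riemann_integrable f a b)) a b :=
  RiemannInt (epsilon (Hf a b) (fun _ => True)).

Section Primitive.
Variable f : R -> R.
Variable Hf : forall a b, inhabited (Riemann_integrable f a b).

Lemma Int_on a b : integral_on f a b (Int f Hf a b).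
Proof. now exists (epsilon (Hf a b) (fun _ => True)). Qed.
Lemma Int_chasles a b c : Int f Hf a b + Int f Hf b c = Int f Hf a c.
Proof. apply RiemannInt_P26. Qed.
Lemma Int_refl a : Int f Hf a a = 0.
Proof. apply RiemannInt_P9. Qed.
Lemma Int_swap a b : Int f Hf a b = - Int f Hf b a.
Proof. pose proof (Int_chasles a b a). rewrite Int_refl in H. lra. Qed.
Lemma Int_bound a b l u : a <= b -> (forall x, a < x < b -> l <= f x <= u) ->
  l * (b - a) <= Int f Hf a b <= u * (b - a).
Proof. apply RiemannInt_const_bound. Qed.
Lemma Int_lower a b l : a <= b -> (forall x, a < x < b -> l <= f x) -> l * (b - a) <= Int f Hf a b.
Proof.
  intros. unfold Int. rewrite <- (RiemannInt_P15 (RiemannInt_P14 a b l)).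
  now apply RiemannInt_P19.
Qed.
Lemma Int_nonneg a b : a <= b -> (forall x, a < x < b -> 0 <= f x) -> 0 <= Int f Hf a b.
Proof. intros Hab Hpos. pose proof (Int_lower a b 0 Hab Hpos). lra. Qed.

Lemma Int_ftc a t : continuity_pt f t -> derivable_pt_lim (fun y => Int f Hf a y) t (f t).
Proof.
  intros Hc eps Heps.
  destruct (Hc (eps / 2) ltac:(lra)) as [d [Hd Hd2]]; simpl in Hd2; unfold Rdist in Hd2.
  exists (mkposreal d Hd). intros s Hs Hsd. simpl in Hsd.
  rewrite <- (Int_chasles a t (t + s)).
  replace (Int f Hf a t + Int f Hf t (t + s) - Int f Hf a t) with (Int f Hf t (t + s)) by ring.
  assert (Hb : forall x, Rabs (x - t) < d -> f t - eps / 2 <= f x <= f t + eps / 2).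
  { intros x Hx. destruct (Req_dec x t) as [->|]. lra.
    assert (Rabs (f x - f t) < eps / 2) by (apply Hd2; repeat split; auto).
    apply Rabs_def2 in H0; lra. }
  apply Rabs_def2 in Hsd.
  destruct (Rle_dec 0 s).
  - destruct (Int_bound t (t + s) (f t - eps / 2) (f t + eps / 2)) as [B1 B2]. lra.
    { intros x Hx. apply Hb. apply Rabs_def1; lra. }
    replace (t + s - t) with s in * by ring.
    apply Rabs_def1; apply (Rmult_lt_reg_r s); try lra; unfold Rdiv;
      rewrite Rmult_minus_distr_r, Rmult_assoc, Rinv_l by lra; nra.
  - destruct (Int_bound (t + s) t (f t - eps / 2) (f t + eps / 2)) as [B1 B2]. lra.
    { intros x Hx. apply Hb. apply Rabs_def1; lra. }
    rewrite Int_swap. replace (t - (t + s)) with (- s) in * by ring.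
    replace (- Int f Hf (t + s) t / s - f t) with ((Int f Hf (t + s) t + f t * s) / (- s))
      by (field; lra).
    apply Rabs_def1; apply (Rmult_lt_reg_r (- s)); try lra; unfold Rdiv;
      rewrite Rmult_assoc, Rinv_l by lra; nra.
Qed.

Lemma Int_cont a t : locally_bounded f -> continuity_pt (fun y => Int f Hf a y) t.
Proof.
  intros Hloc. destruct (Hloc t) as [d [M [Hd HM]]].
  assert (HM0 : 0 <= Rabs M) by apply Rabs_pos.
  intros eps Heps. exists (Rmin d (eps / (Rabs M + 1))). split.
  { apply Rmin_pos; auto. apply Rdiv_lt_0_compat; lra. }
  simpl; unfold Rdist. intros y [_ Hy].
  pose proof (Rlt_le_trans _ _ _ Hy (Rmin_l _ _)) as Hy1.
  pose proof (Rlt_le_trans _ _ _ Hy (Rmin_r _ _)) as Hy2.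
  rewrite <- (Int_chasles a t y).
  replace (Int f Hf a t + Int f Hf t y - Int f Hf a t) with (Int f Hf t y) by ring.
  assert (Hq : Rabs (y - t) * (Rabs M + 1) < eps).
  { apply (Rmult_lt_compat_r (Rabs M + 1)) in Hy2; [|lra].
    unfold Rdiv in Hy2. rewrite Rmult_assoc, Rinv_l in Hy2 by lra. lra. }
  assert (Hfb : forall x, Rmin t y < x < Rmax t y -> - Rabs M <= f x <= Rabs M).
  { intros x Hx. apply Rabs_le_bounds. eapply Rle_trans; [|apply Rle_abs]. apply HM.
    - apply Rabs_def2 in Hy1. unfold Rmin, Rmax in Hx. destruct (Rle_dec t y); lra.
    - unfold Rmin, Rmax in Hx. destruct (Rle_dec t y); lra. }
  destruct (Rle_dec t y).
  - rewrite Rmin_left, Rmax_right in Hfb by lra.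
    destruct (Int_bound t y (- Rabs M) (Rabs M) r Hfb).
    rewrite Rabs_right in Hq by lra. apply Rabs_def1; nra.
  - rewrite Rmin_right, Rmax_left in Hfb by lra.
    destruct (Int_bound y t (- Rabs M) (Rabs M) ltac:(lra) Hfb).
    rewrite Int_swap. rewrite Rabs_left in Hq by lra. apply Rabs_def1; nra.
Qed.
End Primitive.

(* A continuous function with a nonnegative derivative off a finite set is
   nondecreasing (mean value theorem on each piece). *)
Lemma nondecreasing_off_list (D : R -> R) l : forall x y, x <= y ->
  (forall t, x <= t <= y -> continuity_pt D t) ->
  (forall t, x < t < y -> ~ In t l -> exists d, derivable_pt_lim D t d /\ 0 <= d) ->
  D x <= D y.
Proof.
  induction l as [|c l IH]; intros x y Hxy Hc Hd.
  - destruct (Req_dec x y) as [->|Hne]; [lra|].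
    assert (pr : forall c, x < c < y -> derivable_pt D c).
    { intros c Hcc. destruct (constructive_indefinite_description _ (Hd c Hcc (fun A => A)))
        as [d [Hd1 _]]. now exists d. }
    destruct (MVT D (fun t => t) x y pr (fun c _ => derivable_pt_id c)) as [c [Hcin Hmvt]];
      [lra | auto | intros; apply cont_id |].
    rewrite derive_pt_id in Hmvt.
    destruct (Hd c Hcin (fun A => A)) as [d [Hd1 Hd2]].
    rewrite (derive_pt_eq_0 _ _ _ (pr c Hcin) Hd1) in Hmvt. nra.
  - assert (Hd' : forall x' y', x <= x' -> y' <= y -> ~ (x' < c < y') ->
      forall t, x' < t < y' -> ~ In t l -> exists d, derivable_pt_lim D t d /\ 0 <= d).
    { intros x' y' H1 H2 H3 t Ht Hn. apply Hd; [lra|]. intros [E|E]; [subst; lra | auto]. }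
    destruct (Rlt_dec x c) as [Hxc|Hxc]; [destruct (Rlt_dec c y) as [Hcy|Hcy]|].
    + apply Rle_trans with (D c); apply IH; try lra;
        try (intros; apply Hc; lra); apply Hd'; lra.
    + apply IH; auto. apply Hd'; lra.
    + apply IH; auto. apply Hd'; lra.
Qed.

Lemma increment_bound (P g : R -> R) (Hg : forall a b, inhabited (Riemann_integrable g a b))
  (c : R) l s t :
  locally_bounded g -> 0 <= c -> s <= t -> (forall x, s <= x <= t -> continuity_pt P x) ->
  (forall x, s < x < t -> ~ In x l ->
     continuity_pt g x /\ exists d, derivable_pt_lim P x d /\ Rabs d <= c * g x) ->
  Rabs (P t - P s) <= c * Int g Hg s t.
Proof.
  intros Hl Hc Hst HP Hd.
  assert (Hmono : forall sg, sg * sg = 1 ->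
            c * Int g Hg s s + sg * P s <= c * Int g Hg s t + sg * P t).
  { intros sg Hsg. apply (nondecreasing_off_list (fun x => c * Int g Hg s x + sg * P x) l); auto.
    - intros x Hx. apply cont_plus; apply cont_mult; auto using cont_const, Int_cont.
    - intros x Hx Hn. destruct (Hd x Hx Hn) as [Hgc [d [Hd1 Hd2]]].
      exists (0 * Int g Hg s x + c * g x + (0 * P x + sg * d)). split.
      + apply deriv_plus; apply deriv_mult; auto using deriv_const, Int_ftc.
      + apply Rabs_le_bounds in Hd2. destruct (Rle_dec 0 sg); nra. }
  pose proof (Hmono 1 ltac:(ring)). pose proof (Hmono (-1) ltac:(ring)).
  rewrite Int_refl in *. apply Rabs_le. lra.
Qed.

Lemma monotone_bounded_increments (Phi : R -> R) M C :
  (forall x y, M <= x <= y -> Phi x <= Phi y) -> (forall x, M <= x -> Phi x <= C) ->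
  forall eta, 0 < eta -> exists N, M <= N /\ forall x y, N <= x <= y -> Phi y - Phi x <= eta.
Proof.
  intros Hmono Hbnd eta Heta.
  set (S := fun v => exists x, M <= x /\ v = Phi x).
  destruct (completeness S) as [L [HL1 HL2]].
  { exists C. intros v [x [Hx ->]]. auto. }
  { exists (Phi M), M. split; auto; lra. }
  destruct (classic (exists x0, M <= x0 /\ L - eta < Phi x0)) as [[x0 [Hx0 Hx0']]|Hno].
  - exists x0. split; auto. intros x y Hxy.
    assert (Phi y <= L) by (apply HL1; exists y; split; auto; lra).
    assert (Phi x0 <= Phi x) by (apply Hmono; lra). lra.
  - assert (L <= L - eta); [|lra]. apply HL2. intros v [x [Hx ->]].
    apply Rnot_gt_le. intro. apply Hno. now exists x.
Qed.

(* Throughout, a "direction" is a sign [s] with [s * s = 1]: [s = 1] points to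
   [+oo] and [s = -1] to [-oo]; "x is beyond N" means [N < s * x].
   [tends_at s f L]: f x tends to L as x goes to infinity in direction s. *)
Definition tends_at (s : R) (f : R -> R) (L : R) : Prop :=
  forall eps, 0 < eps -> exists N, forall x, N < s * x -> Rabs (f x - L) < eps.

Definition small_tails (s : R) (F : R -> R -> R) : Prop :=
  forall eta, 0 < eta -> exists N, forall a b, N < s * a -> N < s * b -> Rabs (F a b) <= eta.

Section Tails.
Variable f : R -> R.
Variable Hf : forall a b, inhabited (Riemann_integrable (fun x => Rabs (f x)) a b).
Let F := Int (fun x => Rabs (f x)) Hf.

(* By antisymmetry of the integral, ordered bounds suffice. *)
Lemma small_tails_sym s : (forall eta, 0 < eta -> exists N, forall a b,
    N < s * a -> N < s * b -> a <= b -> Rabs (F a b) <= eta) -> small_tails s F.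
Proof.
  intros H eta Heta. destruct (H eta Heta) as [N HN]. exists N. intros a b Ha Hb.
  destruct (Rle_dec a b). now apply HN.
  unfold F. rewrite Int_swap, Rabs_Ropp. apply HN; auto; lra.
Qed.

(* The primitive [F M] is nondecreasing and bounded on [M, +oo). *)
Lemma integrable_near_pinf_tails : integrable_near_pinf f -> small_tails 1 F.
Proof.
  intros [M [C HMC]]. apply small_tails_sym. intros eta Heta.
  destruct (monotone_bounded_increments (F M) M C) with (eta := eta) as [N [HMN HN]]; auto.
  - intros x y Hxy. unfold F. rewrite <- (Int_chasles _ _ M x y).
    pose proof (Int_nonneg _ Hf x y ltac:(lra) (fun z _ => Rabs_pos (f z))). lra.
  - intros x Hx. apply (HMC x); auto. apply Int_on.
  - exists N. intros a b Ha Hb Hab. rewrite !Rmult_1_l in *.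
    assert (Hd : F a b = F M b - F M a) by (unfold F; rewrite <- (Int_chasles _ _ M a b); ring).
    rewrite Hd, Rabs_right. apply HN; lra.
    pose proof (Int_nonneg _ Hf a b Hab (fun z _ => Rabs_pos (f z))). fold F in H. lra.
Qed.

(* Symmetrically, [t |-> F (-t) M] is nondecreasing and bounded on [-M, +oo). *)
Lemma integrable_near_minf_tails : integrable_near_minf f -> small_tails (-1) F.
Proof.
  intros [M [C HMC]]. apply small_tails_sym. intros eta Heta.
  destruct (monotone_bounded_increments (fun t => F (- t) M) (- M) C) with (eta := eta)
    as [N [HMN HN]]; auto.
  - intros x y Hxy. unfold F. rewrite <- (Int_chasles _ _ (- y) (- x) M).
    pose proof (Int_nonneg _ Hf (- y) (- x) ltac:(lra) (fun z _ => Rabs_pos (f z))). lra.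
  - intros x Hx. apply (HMC (- x)); [lra|]. apply Int_on.
  - exists N. intros a b Ha Hb Hab.
    assert (Hd : F a b = F (- - a) M - F (- - b) M)
      by (unfold F; rewrite !Ropp_involutive, <- (Int_chasles _ _ a b M); ring).
    rewrite Hd, Rabs_right. apply HN; lra.
    pose proof (Int_nonneg _ Hf a b Hab (fun z _ => Rabs_pos (f z))). fold F in H.
    rewrite <- Hd. lra.
Qed.
End Tails.

Lemma lim_pinf_tends f L : lim_pinf f L -> tends_at 1 f L.
Proof.
  intros H eps Heps. destruct (H eps Heps) as [N HN]. exists N. intros x Hx.
  apply HN. lra.
Qed.

Lemma lim_minf_tends f L : lim_minf f L -> tends_at (-1) f L.
Proof.
  intros H eps Heps. destruct (H eps Heps) as [N HN]. exists (- N). intros x Hx.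
  apply HN. lra.
Qed.

Lemma tends_at_ext s f g L : (forall x, f x = g x) -> tends_at s f L -> tends_at s g L.
Proof.
  intros E H eps Heps. destruct (H eps Heps) as [N HN]. exists N. intros x Hx.
  rewrite <- E. auto.
Qed.

Lemma beyond_both s (P Q : R -> Prop) :
  (exists N, forall x, N < s * x -> P x) -> (exists N, forall x, N < s * x -> Q x) ->
  exists N, forall x, N < s * x -> P x /\ Q x.
Proof.
  intros [N1 H1] [N2 H2]. exists (Rmax N1 N2). intros x Hx.
  pose proof (Rmax_l N1 N2). pose proof (Rmax_r N1 N2). split; [apply H1 | apply H2]; lra.
Qed.

Definition asym (s : R) (f g : R -> R) : Prop := tends_at s (fun x => f x - g x) 0.

Lemma asym_bound s f g : asym s f g -> forall eps, 0 < eps ->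
  exists N, forall x, N < s * x -> Rabs (f x - g x) < eps.
Proof.
  intros H eps Heps. destruct (H eps Heps) as [N HN]. exists N. intros x Hx.
  specialize (HN x Hx). now rewrite Rminus_0_r in HN.
Qed.

Lemma asym_plus s f1 g1 f2 g2 : asym s f1 g1 -> asym s f2 g2 ->
  asym s (fun x => f1 x + f2 x) (fun x => g1 x + g2 x).
Proof.
  intros H1 H2 eps Heps.
  destruct (beyond_both s _ _ (asym_bound s _ _ H1 (eps / 2) ltac:(lra))
                              (asym_bound s _ _ H2 (eps / 2) ltac:(lra))) as [N HN].
  exists N. intros x Hx. destruct (HN x Hx) as [A B]. rewrite Rminus_0_r.
  replace (f1 x + f2 x - (g1 x + g2 x)) with ((f1 x - g1 x) + (f2 x - g2 x)) by ring.
  pose proof (Rabs_triang (f1 x - g1 x) (f2 x - g2 x)). lra.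
Qed.

Lemma asym_mult s f1 g1 f2 g2 K : asym s f1 g1 -> asym s f2 g2 ->
  (forall x, Rabs (g1 x) <= K) -> (forall x, Rabs (g2 x) <= K) ->
  asym s (fun x => f1 x * f2 x) (fun x => g1 x * g2 x).
Proof.
  intros H1 H2 B1 B2 eps Heps.
  assert (HK : 0 <= K) by (pose proof (B1 0); pose proof (Rabs_pos (g1 0)); lra).
  set (d := Rmin 1 (eps / (2 * K + 2))).
  assert (Hd : 0 < d) by (apply Rmin_pos; [lra | apply Rdiv_lt_0_compat; lra]).
  assert (Hd1 : d <= 1) by apply Rmin_l.
  assert (Hde : d * (2 * K + 2) <= eps).
  { pose proof (Rmin_r 1 (eps / (2 * K + 2))) as Hr. fold d in Hr.
    apply (Rmult_le_compat_r (2 * K + 2)) in Hr; [|lra].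
    unfold Rdiv in Hr. rewrite Rmult_assoc, Rinv_l in Hr by lra. lra. }
  destruct (beyond_both s _ _ (asym_bound s _ _ H1 d Hd) (asym_bound s _ _ H2 d Hd))
    as [N HN].
  exists N. intros x Hx. destruct (HN x Hx) as [A B]. rewrite Rminus_0_r.
  replace (f1 x * f2 x - g1 x * g2 x) with
    ((f1 x - g1 x) * (f2 x - g2 x) + (f1 x - g1 x) * g2 x + g1 x * (f2 x - g2 x)) by ring.
  eapply Rle_lt_trans. apply Rabs_triang. eapply Rle_lt_trans.
  apply Rplus_le_compat_r, Rabs_triang. rewrite !Rabs_mult.
  pose proof (B1 x). pose proof (B2 x).
  pose proof (Rabs_pos (f1 x - g1 x)). pose proof (Rabs_pos (f2 x - g2 x)).
  pose proof (Rabs_pos (g1 x)). pose proof (Rabs_pos (g2 x)).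
  assert (Rabs (f1 x - g1 x) * Rabs (f2 x - g2 x) <= d * d) by nra.
  assert (Rabs (f1 x - g1 x) * Rabs (g2 x) <= d * K) by nra.
  assert (Rabs (g1 x) * Rabs (f2 x - g2 x) <= K * d) by nra.
  nra.
Qed.

Lemma asym_const s c c' : s * s = 1 -> asym s (fun _ => c) (fun _ => c') -> c = c'.
Proof.
  intros Hs H. destruct (Req_dec c c') as [|Hne]; auto. exfalso.
  destruct (H (Rabs (c - c')) ltac:(apply Rabs_pos_lt; lra)) as [N HN].
  specialize (HN (s * (Rabs N + 1))). rewrite Rminus_0_r in HN.
  assert (Hx : N < s * (s * (Rabs N + 1))).
  { rewrite <- Rmult_assoc, Hs. pose proof (Rle_abs N). lra. }
  specialize (HN Hx). lra.
Qed.

Lemma asym_of_lim_pinf f g g' : (forall x, g x = g' x) ->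
  lim_pinf (fun x => f x - g x) 0 -> asym 1 f g'.
Proof.
  intros E H. apply lim_pinf_tends in H. eapply tends_at_ext; [|exact H].
  intro x. cbv beta. now rewrite E.
Qed.

Lemma asym_of_lim_minf f g g' : (forall x, g x = g' x) ->
  lim_minf (fun x => f x - g x) 0 -> asym (-1) f g'.
Proof.
  intros E H. apply lim_minf_tends in H. eapply tends_at_ext; [|exact H].
  intro x. cbv beta. now rewrite E.
Qed.

Definition wave k a b x := a * cos (k * x) + b * sin (k * x).
Definition dwave k a b x := k * (- a * sin (k * x) + b * cos (k * x)).

Lemma sin_cos_sq t : sin t * sin t + cos t * cos t = 1.
Proof. pose proof (sin2_cos2 t). now unfold Rsqr in H. Qed.

Lemma wave_bound k a b x : Rabs (wave k a b x) <= Rabs a + Rabs b.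
Proof.
  unfold wave. eapply Rle_trans. apply Rabs_triang. rewrite !Rabs_mult.
  pose proof (COS_bound (k * x)). pose proof (SIN_bound (k * x)).
  assert (Rabs (cos (k * x)) <= 1) by (apply Rabs_le; lra).
  assert (Rabs (sin (k * x)) <= 1) by (apply Rabs_le; lra).
  pose proof (Rabs_pos a). pose proof (Rabs_pos b).
  pose proof (Rabs_pos (cos (k * x))). pose proof (Rabs_pos (sin (k * x))). nra.
Qed.

Lemma dwave_bound k a b x : 0 <= k -> Rabs (dwave k a b x) <= k * (Rabs a + Rabs b).
Proof.
  intros Hk. unfold dwave. rewrite Rabs_mult, (Rabs_right k) by lra.
  apply Rmult_le_compat_l; [lra|].
  replace (- a * sin (k * x) + b * cos (k * x)) with (wave k b (- a) x) by (unfold wave; ring).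
  rewrite <- (Rabs_Ropp a). rewrite Rplus_comm. apply wave_bound.
Qed.

Lemma far_phase s k N phi : s * s = 1 -> 0 < k ->
  exists x, N < s * x /\ cos (k * x) = cos phi /\ sin (k * x) = sin phi.
Proof.
  intros Hs Hk. destruct (INR_unbounded (Rabs N * k + Rabs phi)) as [n Hn].
  pose proof PI2_3_2. pose proof (pos_INR n).
  pose proof (Rle_abs N) as HN1. pose proof (Rle_abs (- N)) as HN2.
  pose proof (Rle_abs phi) as Hp1. pose proof (Rle_abs (- phi)) as Hp2.
  rewrite Rabs_Ropp in HN2, Hp2.
  assert (INR n <= 2 * INR n * PI) by nra.
  assert (Hfar : Rabs N * k < 2 * INR n * PI - Rabs phi) by lra.
  assert (Hsign : (s - 1) * (s + 1) = 0) by nra.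
  destruct (Rmult_integral _ _ Hsign) as [Hs1|Hs1];
    [replace s with 1 by lra | replace s with (-1) by lra].
  - exists ((phi + 2 * INR n * PI) / k).
    replace (k * ((phi + 2 * INR n * PI) / k)) with (phi + 2 * INR n * PI) by (field; lra).
    split; [|split; [apply cos_period | apply sin_period]].
    apply (Rmult_lt_reg_l k); auto.
    replace (k * (1 * ((phi + 2 * INR n * PI) / k))) with (phi + 2 * INR n * PI) by (field; lra).
    nra.
  - exists ((phi - 2 * INR n * PI) / k).
    replace (k * ((phi - 2 * INR n * PI) / k)) with (phi - 2 * INR n * PI) by (field; lra).
    split; [|split; [rewrite <- (cos_period (phi - 2 * INR n * PI) n)
                   | rewrite <- (sin_period (phi - 2 * INR n * PI) n)]; f_equal; ring].
    apply (Rmult_lt_reg_l k); auto.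
    replace (k * (-1 * ((phi - 2 * INR n * PI) / k))) with (2 * INR n * PI - phi) by (field; lra).
    nra.
Qed.

Definition solution_with (q u u' : R -> R) : Prop :=
  (forall x, derivable_pt_lim u x (u' x)) /\ continuity u' /\
  (forall x, continuity_pt q x -> derivable_pt_lim u' x (- q x * u x)).

Lemma beyond_between s N x y z : s * s = 1 -> N < s * x -> N < s * y -> x <= z <= y ->
  N < s * z.
Proof.
  intros Hs Hx Hy Hz. assert (Hsign : (s - 1) * (s + 1) = 0) by nra.
  destruct (Rmult_integral _ _ Hsign);
    [replace s with 1 in * by lra | replace s with (-1) in * by lra];
    lra.
Qed.

Section VariationOfConstants.
(* Writing [u = P cos(kx) + Q sin(kx)], [u' = k (-P sin(kx) + Q cos(kx))]
   turns [u'' + q u = 0] into [P' = -(k^2-q) u sin(kx)/k], [Q' = (k^2-q) u cos(kx)/k];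
   the coefficients [P], [Q] are therefore nearly constant wherever [q] is
   integrably close to [k^2]. *)
Variables q u u' : R -> R.
Variable k : R.
Hypothesis Hsol : solution_with q u u'.
Hypothesis Hk : 0 < k.

Definition vc_cos t := u t * cos (k * t) - / k * u' t * sin (k * t).
Definition vc_sin t := u t * sin (k * t) + / k * u' t * cos (k * t).

Lemma vc_reconstruct x : u' x = dwave k (vc_cos x) (vc_sin x) x.
Proof.
  unfold dwave, vc_cos, vc_sin.
  transitivity (u' x * (sin (k * x) * sin (k * x) + cos (k * x) * cos (k * x))).
  - rewrite sin_cos_sq; ring.
  - field. lra.
Qed.

Lemma vc_cont x : continuity_pt vc_cos x /\ continuity_pt vc_sin x.
Proof.
  destruct Hsol as [Hu1 [Hu2 _]].
  assert (Cu : continuity_pt u x) by apply (deriv_cont _ _ _ (Hu1 x)).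
  assert (Ck : continuity_pt (fun t => k * t) x)
    by (apply cont_mult; auto using cont_const, cont_id).
  assert (Ccos : continuity_pt (fun t => cos (k * t)) x)
    by (apply cont_comp; auto; apply continuity_cos).
  assert (Csin : continuity_pt (fun t => sin (k * t)) x)
    by (apply cont_comp; auto; apply continuity_sin).
  split; [apply cont_minus | apply cont_plus];
    repeat apply cont_mult; auto using cont_const.
Qed.

Lemma vc_deriv x : continuity_pt q x ->
  derivable_pt_lim vc_cos x (- ((k ^ 2 - q x) * u x / k) * sin (k * x)) /\
  derivable_pt_lim vc_sin x (- ((k ^ 2 - q x) * u x / k) * - cos (k * x)).
Proof.
  intros Hq. destruct Hsol as [Hu1 [_ Hu3]].
  assert (Dk : derivable_pt_lim (fun t => k * t) x (0 * x + k * 1))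
    by (apply deriv_mult; auto using deriv_const, deriv_id).
  split.
  - eapply deriv_eq.
    + apply deriv_minus; repeat apply deriv_mult;
        eauto using deriv_const, deriv_cos, deriv_sin.
    + cbv beta. field. lra.
  - eapply deriv_eq.
    + apply deriv_plus; repeat apply deriv_mult;
        eauto using deriv_const, deriv_cos, deriv_sin.
    + cbv beta. field. lra.
Qed.
End VariationOfConstants.

Section DerivativeAsymptotics.
Variables q u u' : R -> R.
Variables s k a b : R.
Variable Hg : forall x y, inhabited (Riemann_integrable (fun t => Rabs (q t - k ^ 2)) x y).
Hypothesis Hpc : piecewise_continuous q.
Hypothesis Hsol : solution_with q u u'.
Hypothesis Hs : s * s = 1.
Hypothesis Hk : 0 < k.
Hypothesis Htail : small_tails s (Int (fun t => Rabs (q t - k ^ 2)) Hg).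
Hypothesis Hu : asym s u (wave k a b).

Let g t := Rabs (q t - k ^ 2).

Lemma vc_coefficient_bound c z B : Rabs (u z) <= B -> Rabs c <= 1 ->
  Rabs (- ((k ^ 2 - q z) * u z / k) * c) <= B / k * g z.
Proof.
  intros HB Hc. unfold g, Rdiv. rewrite Rabs_mult, Rabs_Ropp, !Rabs_mult, Rabs_inv,
    (Rabs_right k), Rabs_minus_sym by lra.
  pose proof (Rabs_pos (q z - k ^ 2)). pose proof (Rabs_pos (u z)). pose proof (Rabs_pos c).
  pose proof (Rinv_0_lt_compat k Hk).
  assert (Rabs (q z - k ^ 2) * Rabs (u z) <= B * Rabs (q z - k ^ 2)) by nra.
  assert (Rabs (q z - k ^ 2) * Rabs (u z) * / k <= B * Rabs (q z - k ^ 2) * / k) by nra.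
  assert (0 <= Rabs (q z - k ^ 2) * Rabs (u z) * / k) by (apply Rmult_le_pos; nra). nra.
Qed.

Lemma vc_increment N B x y : (forall z, N < s * z -> Rabs (u z) <= B) -> 0 <= B ->
  N < s * x -> N < s * y -> x <= y ->
  Rabs (vc_cos u u' k y - vc_cos u u' k x) <= B / k * Int g Hg x y /\
  Rabs (vc_sin u u' k y - vc_sin u u' k x) <= B / k * Int g Hg x y.
Proof.
  intros HB HB0 Hx Hy Hxy.
  assert (Hc : 0 <= B / k) by (apply Rmult_le_pos; [lra | apply Rlt_le, Rinv_0_lt_compat; lra]).
  assert (Hgl : locally_bounded g)
    by (apply pc_locally_bounded, pc_abs_deviation, Hpc).
  destruct (Req_dec x y) as [->|Hne].
  { rewrite !Rminus_diag, Rabs_R0, Int_refl. lra. }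
  destruct (Hpc x y ltac:(lra)) as [l [Hl _]].
  assert (Hbeyond : forall z, x < z < y -> Rabs (u z) <= B)
    by (intros z Hz; apply HB, (beyond_between s N x y z); auto; lra).
  assert (Hgc : forall z, continuity_pt q z -> continuity_pt g z)
    by (intros z Hz; apply cont_abs, cont_minus; auto using cont_const).
  pose proof (fun z => vc_cont q u u' k Hsol z) as Hcont.
  split; apply (increment_bound _ g Hg (B / k) l); auto; try (intros z _; apply Hcont);
    intros z Hz Hn; assert (Hqz : continuity_pt q z) by (apply Hl; auto; lra);
    split; auto; destruct (vc_deriv q u u' k Hsol Hk z Hqz) as [D1 D2];
    eexists; (split; [eassumption|]); apply vc_coefficient_bound; auto.
  - pose proof (SIN_bound (k * z)). apply Rabs_le; lra.
  - pose proof (COS_bound (k * z)). apply Rabs_le; lra.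
Qed.

Lemma bounded_far : exists N B, 0 < B /\ forall z, N < s * z -> Rabs (u z) <= B.
Proof.
  destruct (asym_bound s _ _ Hu 1 ltac:(lra)) as [N HN].
  exists N, (Rabs a + Rabs b + 1). split.
  - pose proof (Rabs_pos a). pose proof (Rabs_pos b). lra.
  - intros z Hz. specialize (HN z Hz). pose proof (wave_bound k a b z).
    pose proof (Rabs_triang (u z - wave k a b z) (wave k a b z)) as T.
    replace (u z - wave k a b z + wave k a b z) with (u z) in T by ring. lra.
Qed.

Lemma vc_nearly_constant e : 0 < e -> exists N, forall x y, N < s * x -> N < s * y ->
  Rabs (vc_cos u u' k y - vc_cos u u' k x) <= e /\
  Rabs (vc_sin u u' k y - vc_sin u u' k x) <= e.
Proof.
  intros He. destruct bounded_far as [N0 [B [HB0 HB]]].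
  destruct (Htail (e * k / B)) as [N1 HN1]. { apply Rdiv_lt_0_compat; nra. }
  exists (Rmax N0 N1).
  assert (Hord : forall x y, Rmax N0 N1 < s * x -> Rmax N0 N1 < s * y -> x <= y ->
    Rabs (vc_cos u u' k y - vc_cos u u' k x) <= e /\
    Rabs (vc_sin u u' k y - vc_sin u u' k x) <= e).
  { intros x y Hx Hy Hxy. pose proof (Rmax_l N0 N1). pose proof (Rmax_r N0 N1).
    assert (HI : B / k * Int g Hg x y <= e).
    { pose proof (HN1 x y ltac:(lra) ltac:(lra)) as T.
      apply Rabs_le_bounds in T as [_ T].
      apply (Rmult_le_compat_l (B / k)) in T; [|apply Rlt_le, Rdiv_lt_0_compat; lra].
      replace (B / k * (e * k / B)) with e in T by (field; lra). unfold g. lra. }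
    destruct (vc_increment N0 B x y HB ltac:(lra) ltac:(lra) ltac:(lra) Hxy).
    split; lra. }
  intros x y Hx Hy. destruct (Rle_dec x y). now apply Hord.
  rewrite (Rabs_minus_sym (vc_cos u u' k y)), (Rabs_minus_sym (vc_sin u u' k y)).
  apply Hord; auto; lra.
Qed.

(* The coefficients [P], [Q] converge to the amplitudes of the asymptotic wave:
   compare them with [u] at far points where [kx] = 0 or pi/2 (mod 2 pi). *)
Lemma vc_limits : tends_at s (vc_cos u u' k) a /\ tends_at s (vc_sin u u' k) b.
Proof.
  assert (Hlim : forall (V : R -> R) c phi,
    cos phi = 1 /\ sin phi = 0 \/ cos phi = 0 /\ sin phi = 1 ->
    (forall x, cos (k * x) = cos phi -> sin (k * x) = sin phi -> V x = u x /\ wave k a b x = c) ->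
    (forall e, 0 < e -> exists N, forall x y, N < s * x -> N < s * y -> Rabs (V y - V x) <= e) ->
    tends_at s V c).
  { intros V c phi Hphi HV HC eps Heps.
    destruct (HC (eps / 2) ltac:(lra)) as [N1 HN1].
    destruct (asym_bound s _ _ Hu (eps / 2) ltac:(lra)) as [N2 HN2].
    destruct (far_phase s k (Rmax N1 N2) phi Hs Hk) as [x0 [Hx0 [Hc Hsn]]].
    pose proof (Rmax_l N1 N2). pose proof (Rmax_r N1 N2).
    destruct (HV x0 Hc Hsn) as [E1 E2].
    assert (A : Rabs (V x0 - c) < eps / 2) by (rewrite E1, <- E2; apply HN2; lra).
    exists N1. intros t Ht. pose proof (HN1 x0 t ltac:(lra) Ht) as B.
    pose proof (Rabs_triang (V t - V x0) (V x0 - c)) as T.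
    replace (V t - V x0 + (V x0 - c)) with (V t - c) in T by ring. lra. }
  split.
  - apply (Hlim _ a 0); [left; split; [apply cos_0 | apply sin_0] | |].
    + intros x Hc Hsn. rewrite cos_0 in Hc. rewrite sin_0 in Hsn.
      unfold vc_cos, wave. rewrite Hc, Hsn. split; ring.
    + intros e He. destruct (vc_nearly_constant e He) as [N HN]. exists N.
      intros x y Hx Hy. apply (HN x y Hx Hy).
  - apply (Hlim _ b (PI / 2)); [right; split; [apply cos_PI2 | apply sin_PI2] | |].
    + intros x Hc Hsn. rewrite cos_PI2 in Hc. rewrite sin_PI2 in Hsn.
      unfold vc_sin, wave. rewrite Hc, Hsn. split; ring.
    + intros e He. destruct (vc_nearly_constant e He) as [N HN]. exists N.
      intros x y Hx Hy. apply (HN x y Hx Hy).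
Qed.

Theorem derivative_asymptotics : asym s u' (dwave k a b).
Proof.
  destruct vc_limits as [HP HQ]. intros eps Heps.
  destruct (beyond_both s _ _ (HP (eps / (2 * k)) ltac:(apply Rdiv_lt_0_compat; lra))
                              (HQ (eps / (2 * k)) ltac:(apply Rdiv_lt_0_compat; lra)))
    as [N HN].
  exists N. intros x Hx. destruct (HN x Hx) as [A B]. rewrite Rminus_0_r.
  rewrite (vc_reconstruct u u' k Hk x).
  replace (dwave k (vc_cos u u' k x) (vc_sin u u' k x) x - dwave k a b x)
    with (dwave k (vc_cos u u' k x - a) (vc_sin u u' k x - b) x) by (unfold dwave; ring).
  eapply Rle_lt_trans. apply dwave_bound; lra.
  replace eps with (k * (eps / (2 * k) + eps / (2 * k))) by (field; lra).
  apply Rmult_lt_compat_l; lra.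
Qed.
End DerivativeAsymptotics.

Lemma asym_ext s f g f' g' : (forall x, f x = f' x) -> (forall x, g x = g' x) ->
  asym s f g -> asym s f' g'.
Proof.
  intros Ef Eg H. apply (tends_at_ext s (fun x => f x - g x)); auto.
  intro x. now rewrite Ef, Eg.
Qed.

Lemma asym_opp s f g : asym s f g -> asym s (fun x => - f x) (fun x => - g x).
Proof.
  intros H eps Heps. destruct (H eps Heps) as [N HN]. exists N. intros x Hx.
  replace (- f x - - g x - 0) with (- (f x - g x - 0)) by ring. rewrite Rabs_Ropp. auto.
Qed.

Lemma polar_form A B : exists phi,
  sqrt (A * A + B * B) * cos phi = A /\ sqrt (A * A + B * B) * sin phi = B.
Proof.
  set (rho := sqrt (A * A + B * B)).
  assert (Hrho : rho * rho = A * A + B * B) by (apply sqrt_sqrt; nra).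
  assert (Hrho0 : 0 <= rho) by apply sqrt_pos. clearbody rho.
  destruct (Req_dec rho 0) as [Z|NZ].
  { exists 0. subst. assert (A = 0 /\ B = 0) as [-> ->] by (split; nra). split; ring. }
  assert (Hb : -1 <= A / rho <= 1).
  { split; apply (Rmult_le_reg_r rho); try lra; unfold Rdiv;
      rewrite Rmult_assoc, Rinv_l by lra; nra. }
  assert (Hs : sqrt (1 - (A / rho)²) = Rabs B / rho).
  { rewrite <- (sqrt_Rsqr (Rabs B / rho)).
    2: { apply Rmult_le_pos. apply Rabs_pos. apply Rlt_le, Rinv_0_lt_compat; lra. }
    f_equal. unfold Rsqr.
    replace (Rabs B / rho * (Rabs B / rho)) with (Rabs B * Rabs B / (rho * rho)) by (field; lra).
    rewrite <- Rabs_mult, Rabs_right by nra.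
    replace (B * B) with (rho * rho - A * A) by lra. field. lra. }
  destruct (Rle_dec 0 B).
  - exists (acos (A / rho)). rewrite cos_acos, sin_acos, Hs, Rabs_right by (auto; lra).
    split; field; lra.
  - exists (- acos (A / rho)). rewrite cos_neg, sin_neg, cos_acos, sin_acos, Hs by auto.
    rewrite Rabs_left by lra. split; field; lra.
Qed.

Section PlaneWaves.
Variables u v u' v' : R -> R.
Variables s k a b c d : R.
Hypothesis Hs : s * s = 1.
Hypothesis Hk : 0 < k.
Hypothesis Hu : asym s u (wave k a b).
Hypothesis Hu' : asym s u' (dwave k a b).
Hypothesis Hv : asym s v (wave k c d).
Hypothesis Hv' : asym s v' (dwave k c d).

Let K := (1 + k) * (Rabs a + Rabs b + Rabs c + Rabs d).

Lemma wave_bounds x : Rabs (wave k a b x) <= K /\ Rabs (dwave k a b x) <= K /\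
                      Rabs (wave k c d x) <= K /\ Rabs (dwave k c d x) <= K.
Proof.
  unfold K. pose proof (wave_bound k a b x). pose proof (wave_bound k c d x).
  pose proof (dwave_bound k a b x ltac:(lra)). pose proof (dwave_bound k c d x ltac:(lra)).
  pose proof (Rabs_pos a). pose proof (Rabs_pos b). pose proof (Rabs_pos c).
  pose proof (Rabs_pos d). repeat split; nra.
Qed.

Let asym_mult_K f g (F G : R -> R) : asym s f F -> asym s g G ->
  (forall x, Rabs (F x) <= K) -> (forall x, Rabs (G x) <= K) ->
  asym s (fun x => f x * g x) (fun x => F x * G x).
Proof. intros; eapply asym_mult; eauto. Qed.

Lemma wronskian_of_waves w : (forall x, u x * v' x - v x * u' x = w) -> w = k * (a * d - b * c).
Proof.
  intros HW. apply (asym_const s _ _ Hs).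
  pose proof (asym_plus s _ _ _ _
    (asym_mult_K _ _ _ _ Hu Hv' ltac:(apply wave_bounds) ltac:(apply wave_bounds))
    (asym_opp s _ _ (asym_mult_K _ _ _ _ Hv Hu' ltac:(apply wave_bounds) ltac:(apply wave_bounds))))
    as H.
  eapply asym_ext; [| |exact H].
  - intro x. rewrite <- (HW x). ring.
  - intro x. unfold wave, dwave.
    transitivity (k * (a * d - b * c) *
                  (sin (k * x) * sin (k * x) + cos (k * x) * cos (k * x))).
    + ring.
    + rewrite sin_cos_sq. ring.
Qed.

Lemma modulus_of_waves : c = - b -> d = a ->
  asym s (fun x => u x * u x + v x * v x) (fun _ => a * a + b * b) /\
  asym s (fun x => u' x * u' x + v' x * v' x) (fun _ => k * k * (a * a + b * b)).
Proof.
  intros Hc Hd. split.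
  - eapply asym_ext; [reflexivity | |
      apply asym_plus; apply asym_mult_K; try eassumption; apply wave_bounds].
    intro x. unfold wave. rewrite Hc, Hd.
    transitivity ((a * a + b * b) * (sin (k * x) * sin (k * x) + cos (k * x) * cos (k * x))).
    + ring.
    + rewrite sin_cos_sq. ring.
  - eapply asym_ext; [reflexivity | |
      apply asym_plus; apply asym_mult_K; try eassumption; apply wave_bounds].
    intro x. unfold dwave. rewrite Hc, Hd.
    transitivity (k * k * (a * a + b * b) *
                  (sin (k * x) * sin (k * x) + cos (k * x) * cos (k * x))).
    + ring.
    + rewrite sin_cos_sq. ring.
Qed.

(* The flux [u u' + v v'] oscillates like [k (A cos 2kx + B sin 2kx)], hence
   comes close to its peak value [k sqrt(A^2 + B^2)] arbitrarily far out. *)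
Lemma flux_peaks e N : 0 < e -> exists x, N < s * x /\
  k * sqrt ((a * b + c * d) * (a * b + c * d) +
            ((b * b + d * d - a * a - c * c) / 2) * ((b * b + d * d - a * a - c * c) / 2)) - e
  <= u x * u' x + v x * v' x.
Proof.
  intros He. set (A := a * b + c * d). set (B := (b * b + d * d - a * a - c * c) / 2).
  assert (Hflux : asym s (fun x => u x * u' x + v x * v' x)
                    (fun x => k * (A * cos (2 * k * x) + B * sin (2 * k * x)))).
  { eapply asym_ext; [reflexivity | |
      apply asym_plus; apply asym_mult_K; try eassumption; apply wave_bounds].
    intro x. unfold wave, dwave, A, B. replace (2 * k * x) with (2 * (k * x)) by ring.
    rewrite cos_2a, sin_2a. field. }
  destruct (asym_bound s _ _ Hflux e He) as [N1 HN1].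
  destruct (polar_form A B) as [phi [Hc Hs']].
  destruct (far_phase s (2 * k) (Rmax N N1) phi Hs ltac:(lra)) as [x [Hx [Ec Es]]].
  pose proof (Rmax_l N N1). pose proof (Rmax_r N N1).
  exists x. split. lra.
  specialize (HN1 x ltac:(lra)). rewrite Ec, Es in HN1. apply Rabs_def2 in HN1.
  set (rho := sqrt (A * A + B * B)) in *.
  assert (Hrho : rho * rho = A * A + B * B) by (apply sqrt_sqrt; nra).
  assert (Hpeak : rho = A * cos phi + B * sin phi).
  { destruct (Req_dec rho 0) as [Z|NZ].
    - rewrite Z in Hc, Hs' |- *. rewrite <- Hc, <- Hs'. ring.
    - apply (Rmult_eq_reg_l rho); auto. rewrite Hrho.
      rewrite <- Hc at 1. rewrite <- Hs' at 1. ring. }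
  rewrite Hpeak. lra.
Qed.
End PlaneWaves.

Lemma sq_le_Rabs a b : a * a <= b * b -> 0 <= b -> Rabs a <= b.
Proof.
  intros H Hb. apply Rabs_le. destruct (Rle_dec 0 a); split; nra.
Qed.

Section Energy.
(* [u + i v] is a complex solution of [u'' + q u = 0], [h > 0] a C^1 comparison
   wave number.  Its [h]-weighted energy changes at a relative rate at most
   [|h'/h| + |q - h^2|/h], once the conserved Wronskian is taken into account. *)
Variables q h h' u v u' v' : R -> R.
Hypothesis Hpc : piecewise_continuous q.
Hypothesis Hhpos : forall x, 0 < h x.
Hypothesis Hhd : forall x, derivable_pt_lim h x (h' x).
Hypothesis Hh'c : continuity h'.
Hypothesis Hu : solution_with q u u'.
Hypothesis Hv : solution_with q v v'.

(* The Wronskian [Im (conj u u')]; it is constant since [u], [v] solve the same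
   equation. *)
Definition wronskian x := u x * v' x - v x * u' x.

Lemma wronskian_const x y : wronskian x = wronskian y.
Proof.
  destruct Hu as [Hu1 [Hu2 Hu3]]. destruct Hv as [Hv1 [Hv2 Hv3]].
  assert (Hmono : forall sg x y, x < y ->
            sg * wronskian x <= sg * wronskian y).
  { intros sg x0 y0 Hxy. destruct (Hpc x0 y0 Hxy) as [l [Hl _]].
    apply (nondecreasing_off_list (fun t => sg * wronskian t) l); [lra | |].
    - intros t _. apply cont_mult; [apply cont_const|]. unfold wronskian.
      apply cont_minus; apply cont_mult; auto; eapply deriv_cont; eauto.
    - intros t Ht Hn. exists 0. split; [|lra].
      eapply deriv_eq. apply deriv_mult. apply deriv_const. unfold wronskian.
      apply deriv_minus; apply deriv_mult; auto; [apply Hv3 | apply Hu3]; apply Hl; auto; lra.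
      ring. }
  destruct (Rtotal_order x y) as [H|[H|H]].
  - pose proof (Hmono 1 x y H). pose proof (Hmono (-1) x y H). lra.
  - now subst.
  - pose proof (Hmono 1 y x H). pose proof (Hmono (-1) y x H). lra.
Qed.

Definition energy x := (h x * (u x * u x + v x * v x) + (u' x * u' x + v' x * v' x) / h x) / 2.
Definition flux x := u x * u' x + v x * v' x.
Definition imbalance x := (h x * (u x * u x + v x * v x) - (u' x * u' x + v' x * v' x) / h x) / 2.

(* [E^2 = F^2 + D^2 + W^2]: since [E^2 - D^2 = |u|^2 |u'|^2 = |conj u u'|^2 = F^2 + W^2]. *)
Lemma energy_identity x :
  energy x * energy x = flux x * flux x + imbalance x * imbalance x + wronskian x * wronskian x.
Proof. unfold energy, flux, imbalance, wronskian. pose proof (Hhpos x). field. lra. Qed.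

Lemma energy_nonneg x : 0 <= energy x.
Proof.
  unfold energy. pose proof (Hhpos x).
  assert (0 <= (u' x * u' x + v' x * v' x) / h x)
    by (apply Rmult_le_pos; [nra | apply Rlt_le, Rinv_0_lt_compat; auto]).
  nra.
Qed.

Lemma energy_cont x : continuity_pt energy x.
Proof.
  destruct Hu as [Hu1 [Hu2 _]]. destruct Hv as [Hv1 [Hv2 _]].
  assert (Ch : continuity_pt h x) by (eapply deriv_cont; eauto).
  assert (Cu : continuity_pt u x) by (eapply deriv_cont; eauto).
  assert (Cv : continuity_pt v x) by (eapply deriv_cont; eauto).
  pose proof (Hhpos x). unfold energy.
  apply cont_div; [|apply cont_const|lra].
  apply cont_plus; [apply cont_mult; auto; apply cont_plus; apply cont_mult; auto|].
  apply cont_div; [apply cont_plus; apply cont_mult; auto | auto | lra].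
Qed.

Lemma energy_deriv x : continuity_pt q x ->
  derivable_pt_lim energy x (h' x / h x * imbalance x + (h x ^ 2 - q x) / h x * flux x).
Proof.
  intros Hq. destruct Hu as [Hu1 [_ Hu3]]. destruct Hv as [Hv1 [_ Hv3]].
  pose proof (Hhpos x). unfold energy.
  eapply deriv_eq.
  - apply deriv_div; [|apply deriv_const|lra].
    apply deriv_plus.
    + apply deriv_mult; auto. apply deriv_plus; apply deriv_mult; auto.
    + apply deriv_div; [apply deriv_plus; apply deriv_mult; auto | auto | lra].
  - cbv beta. unfold imbalance, flux, Rsqr. field. lra.
Qed.

Definition rate x := Rabs (h' x / h x) + Rabs (q x - h x ^ 2) / h x.

Lemma rate_pc : piecewise_continuous rate.
Proof.
  assert (Ch : continuity h) by (intro x; eapply deriv_cont; eauto).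
  replace rate with (fun x => Rabs ((fun t => h' t / h t) x) +
                    Rabs (q x - (fun t => h t ^ 2) x) * (fun t => / h t) x)
    by (apply functional_extensionality; reflexivity).
  apply pc_weighted_deviation; auto; intro x; pose proof (Hhpos x).
  - apply cont_div; auto; lra.
  - now apply cont_pow.
  - apply cont_inv; auto; lra.
Qed.

Lemma rate_cont x : continuity_pt q x -> continuity_pt rate x.
Proof.
  intros Hq. pose proof (Hhpos x).
  assert (Ch : continuity_pt h x) by (eapply deriv_cont; eauto).
  unfold rate. apply cont_plus; [apply cont_abs, cont_div; auto; lra|].
  apply cont_div; auto; [|lra]. apply cont_abs, cont_minus; auto. now apply cont_pow.
Qed.

Definition Hrate := pc_integrable rate rate_pc.

(* The energy regularized by [eps > 0], reduced by the conserved Wronskian [w]: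
   [E + sqrt(E^2 - w^2)] is the larger root of [X^2 - 2 E X + w^2]. *)
Definition reduced_energy eps x :=
  energy x + eps + sqrt ((energy x + eps) * (energy x + eps) - wronskian 0 * wronskian 0).

Lemma reduced_energy_pos eps x : 0 < eps -> 0 < reduced_energy eps x.
Proof.
  intros. unfold reduced_energy. pose proof (energy_nonneg x).
  pose proof (sqrt_pos ((energy x + eps) * (energy x + eps) - wronskian 0 * wronskian 0)). lra.
Qed.

Lemma log_reduced_energy_increment eps x y : 0 < eps -> x <= y ->
  Rabs (ln (reduced_energy eps y) - ln (reduced_energy eps x)) <= Int rate Hrate x y.
Proof.
  intros Heps Hxy. set (w := wronskian 0).
  assert (Hw : forall z, w * w <= energy z * energy z)
    by (intro z; unfold w; rewrite (wronskian_const 0 z), energy_identity; nra).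
  assert (Harg : forall z, 0 < (energy z + eps) * (energy z + eps) - w * w)
    by (intro z; pose proof (Hw z); pose proof (energy_nonneg z); nra).
  destruct (Req_dec x y) as [->|Hne]. { rewrite Rminus_diag, Rabs_R0, Int_refl. lra. }
  destruct (Hpc x y ltac:(lra)) as [l [Hl _]].
  replace (Int rate Hrate x y) with (1 * Int rate Hrate x y) by ring.
  apply (increment_bound (fun t => ln (reduced_energy eps t)) rate Hrate 1 l x y);
    [apply pc_locally_bounded, rate_pc | lra | lra | |].
  - intros z _. unfold reduced_energy. apply cont_ln; [|now apply reduced_energy_pos].
    apply cont_plus; [apply cont_plus; auto using energy_cont, cont_const|].
    apply cont_sqrt; [|left; auto].
    apply cont_minus; auto using cont_const.
    apply cont_mult; apply cont_plus; auto using energy_cont, cont_const.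
  - intros z Hz Hn. assert (Hq : continuity_pt q z) by (apply Hl; auto; lra).
    split; [now apply rate_cont|].
    set (S := sqrt ((energy z + eps) * (energy z + eps) - w * w)).
    assert (HS : 0 < S) by (apply sqrt_lt_R0, Harg).
    assert (HSS : S * S = (energy z + eps) * (energy z + eps) - w * w)
      by (apply sqrt_sqrt; left; apply Harg).
    set (E' := h' z / h z * imbalance z + (h z ^ 2 - q z) / h z * flux z).
    exists (E' / S). split.
    + eapply deriv_eq.
      * apply deriv_ln; [|now apply reduced_energy_pos].
        apply deriv_plus; [apply deriv_plus; [apply energy_deriv; auto | apply deriv_const]|].
        apply deriv_sqrt; [|apply Harg].
        apply deriv_minus; [|apply deriv_const].
        apply deriv_mult; apply deriv_plus; try apply energy_deriv; auto; apply deriv_const.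
      * pose proof (energy_nonneg z). unfold reduced_energy. fold w S. fold E'. field. lra.
    + (* |flux|, |imbalance| <= sqrt(E^2 - w^2) <= S by the energy identity *)
      pose proof (energy_identity z) as HE. rewrite <- (wronskian_const 0 z) in HE. fold w in HE.
      pose proof (energy_nonneg z).
      assert (HR : Rabs (flux z) <= S) by (apply sq_le_Rabs; nra).
      assert (HD : Rabs (imbalance z) <= S) by (apply sq_le_Rabs; nra).
      pose proof (Hhpos z).
      assert (HE' : Rabs E' <= rate z * S).
      { unfold E', rate. eapply Rle_trans. apply Rabs_triang. rewrite !Rabs_mult.
        replace (Rabs ((h z ^ 2 - q z) / h z)) with (Rabs (q z - h z ^ 2) / h z).
        - pose proof (Rabs_pos (h' z / h z)).
          assert (0 <= Rabs (q z - h z ^ 2) / h z)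
            by (apply Rmult_le_pos; [apply Rabs_pos | apply Rlt_le, Rinv_0_lt_compat; auto]).
          nra.
        - unfold Rdiv. rewrite Rabs_mult, Rabs_inv, (Rabs_right (h z)), Rabs_minus_sym by lra.
          reflexivity. }
      unfold Rdiv. rewrite Rabs_mult, Rabs_inv, (Rabs_right S) by lra.
      apply (Rmult_le_reg_r S); auto. rewrite Rmult_assoc, Rinv_l by lra. lra.
Qed.

Lemma reduced_energy_transport eps x y : 0 < eps -> x <= y ->
  reduced_energy eps x <= reduced_energy eps y * exp (Int rate Hrate x y).
Proof.
  intros Heps Hxy. pose proof (log_reduced_energy_increment eps x y Heps Hxy) as H.
  apply Rabs_le_bounds in H.
  rewrite <- (exp_ln (reduced_energy eps x)), <- (exp_ln (reduced_energy eps y)), <- exp_plus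
    by (now apply reduced_energy_pos).
  destruct (Req_dec (ln (reduced_energy eps x)) (ln (reduced_energy eps y) + Int rate Hrate x y))
    as [->|Hne]; [lra|]. left. apply exp_increasing. lra.
Qed.
End Energy.

Lemma comparison_close k2y hy kp d : 0 < kp -> 0 < hy -> Rabs (k2y - kp ^ 2) < d ->
  Rabs (k2y - hy ^ 2) / hy < d -> Rabs (hy - kp) <= d * (1 + / kp).
Proof.
  intros Hkp Hh H1 H2.
  assert (H3 : Rabs (k2y - hy ^ 2) < d * hy).
  { apply (Rmult_lt_compat_r hy) in H2; auto. unfold Rdiv in H2.
    rewrite Rmult_assoc, Rinv_l in H2 by lra. lra. }
  assert (Hd : 0 < d) by (pose proof (Rabs_pos (k2y - kp ^ 2)); lra).
  apply Rabs_def2 in H1. apply Rabs_def2 in H3.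
  set (p := / kp). assert (Hp : p * kp = 1) by (unfold p; field; lra).
  assert (Hp0 : 0 < p) by (unfold p; apply Rinv_0_lt_compat; auto).
  assert (Hkey : Rabs (hy - kp) * (hy + kp) < d * (hy + 1)).
  { rewrite <- (Rabs_right (hy + kp)), <- Rabs_mult by lra. apply Rabs_def1; simpl in *; nra. }
  assert (d * (hy + 1) <= d * (1 + p) * (hy + kp)) by nra.
  pose proof (Rabs_pos (hy - kp)).
  destruct (Rle_dec (Rabs (hy - kp)) (d * (1 + p))); auto. nra.
Qed.

Lemma energy_estimate h0 N M kp t2 d : 0 < kp -> 0 <= t2 -> 0 < d -> d <= 1 -> d <= kp / 2 ->
  Rabs (h0 - kp) <= d -> Rabs (N - t2) <= d -> Rabs (M - kp * kp * t2) <= d ->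
  (h0 * N + M / h0) / 2 <= kp * t2 + d * (kp + (1 + t2) / kp).
Proof.
  intros Hkp Ht2 Hd Hd1 Hd2 A1 A2 A3.
  apply Rabs_le_bounds in A1. apply Rabs_le_bounds in A2. apply Rabs_le_bounds in A3.
  assert (Hh : kp / 2 <= h0) by lra. assert (Hh0 : 0 < h0) by lra.
  set (q := / h0). assert (Hq : q * h0 = 1) by (unfold q; field; lra).
  assert (Hq0 : 0 < q) by (unfold q; apply Rinv_0_lt_compat; auto).
  set (p := / kp). assert (Hp : p * kp = 1) by (unfold p; field; lra).
  assert (Hp0 : 0 < p) by (unfold p; apply Rinv_0_lt_compat; auto).
  assert (Hq1 : q <= 2 * p).
  { unfold q, p. replace (2 * / kp) with (/ (kp / 2)) by (field; lra).
    apply Rinv_le_contravar; lra. }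
  replace ((1 + t2) / kp) with ((1 + t2) * p) by (unfold p; field; lra).
  unfold Rdiv. fold q.
  assert (Eq : (h0 * N + M * q) * / 2 - kp * t2 =
     (h0 * (N - t2) + (M - kp * kp * t2) * q) / 2 + t2 * ((h0 - kp) * (h0 - kp)) * q / 2)
    by (unfold q; field; lra).
  assert (B1 : h0 * (N - t2) <= (3 * kp / 2) * d)
    by (destruct (Rle_dec 0 (N - t2)); nra).
  assert (B2 : (M - kp * kp * t2) * q <= d * (2 * p))
    by (destruct (Rle_dec 0 (M - kp * kp * t2)); nra).
  assert (B3 : t2 * ((h0 - kp) * (h0 - kp)) * q <= t2 * d * (2 * p)).
  { assert ((h0 - kp) * (h0 - kp) <= d * d) by nra.
    assert (d * d <= d) by nra.
    assert ((h0 - kp) * (h0 - kp) * q <= d * (2 * p)) by nra. nra. }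
  assert (kp * d * (3 / 4) + d * p + t2 * d * p <= d * (kp + (1 + t2) * p)) by nra.
  lra.
Qed.

Lemma hypot_lower R r0 w T0 d : 0 <= r0 -> 0 < T0 -> T0 * T0 = r0 * r0 + w * w ->
  r0 - d <= R -> 0 <= d -> T0 - d <= sqrt (R * R + w * w).
Proof.
  intros Hr0 HT HTT HR Hd.
  destruct (Rle_dec (T0 - d) 0). { pose proof (sqrt_pos (R * R + w * w)). lra. }
  rewrite <- (sqrt_Rsqr (T0 - d)) by lra. apply sqrt_le_1_alt. unfold Rsqr.
  assert (r0 <= T0) by nra.
  destruct (Rle_dec 0 (r0 - d)); nra.
Qed.

Lemma le_of_vanishing_excess K w A : 0 <= w -> 1 <= A ->
  (forall eta t, 0 < eta -> 0 < t -> t <= 1 ->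
     K - eta <= A * (w + t + sqrt ((w + t) * (w + t) - w * w))) ->
  K <= A * w.
Proof.
  intros Hw HA H. destruct (Rle_dec K (A * w)) as [|Hgt]; auto. exfalso.
  set (D := K - A * w). assert (HD : 0 < D) by (unfold D; lra).
  set (del := D / (4 * A)). assert (Hdel : 0 < del) by (apply Rdiv_lt_0_compat; lra).
  set (t := Rmin 1 (Rmin del (del * del / (2 * w + 1)))).
  assert (Ht : 0 < t)
    by (apply Rmin_pos; [lra | apply Rmin_pos; auto; apply Rdiv_lt_0_compat; nra]).
  assert (Ht1 : t <= 1) by apply Rmin_l.
  assert (Ht2 : t <= del) by (eapply Rle_trans; [apply Rmin_r | apply Rmin_l]).
  assert (Ht3 : t <= del * del / (2 * w + 1)) by (eapply Rle_trans; [apply Rmin_r | apply Rmin_r]).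
  assert (Hsq : sqrt ((w + t) * (w + t) - w * w) <= del).
  { rewrite <- (sqrt_Rsqr del) by lra. apply sqrt_le_1_alt. unfold Rsqr.
    assert (t * (2 * w + 1) <= del * del).
    { apply (Rmult_le_compat_r (2 * w + 1)) in Ht3; [|lra].
      unfold Rdiv in Ht3. rewrite Rmult_assoc, Rinv_l in Ht3 by lra. lra. }
    nra. }
  specialize (H t t Ht Ht Ht1).
  assert (A * del = D / 4) by (unfold del; field; lra).
  assert (A * (w + t + sqrt ((w + t) * (w + t) - w * w)) <= A * w + D / 2).
  { assert (w + t + sqrt ((w + t) * (w + t) - w * w) <= w + 2 * del) by lra.
    apply (Rmult_le_compat_l A) in H1; lra. }
  assert (t <= D / 4).
  { assert (D / (4 * A) <= D / 4)
      by (unfold Rdiv; apply Rmult_le_compat_l; [lra | apply Rinv_le_contravar; lra]).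
    unfold del in Ht2. lra. }
  unfold D in *. lra.
Qed.

Lemma sech_bound I r : 0 <= r -> (1 + r) * (1 + r) <= exp I * (1 - r * r) ->
  Rsqr (sech (I / 2)) <= 1 - r * r.
Proof.
  intros Hr H.
  set (a := exp (I / 2)). assert (Ha : 0 < a) by apply exp_pos.
  assert (E1 : exp I = a * a) by (unfold a; rewrite <- exp_plus; f_equal; field).
  assert (Hs : sech (I / 2) = 2 * a / (a * a + 1)).
  { unfold sech, cosh. rewrite exp_Ropp. fold a. field. split; nra. }
  rewrite Hs. rewrite E1 in H. set (s := a * a) in *.
  assert (Hs0 : 0 < s) by (unfold s; nra).
  assert (Hr1 : r < 1).
  { destruct (Rlt_dec r 1); auto. assert (0 <= s * (r * r - 1)) by (apply Rmult_le_pos; nra). nra. }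
  assert (Hp : r * (s + 1) <= s - 1) by nra.
  unfold Rsqr.
  replace (2 * a / (s + 1) * (2 * a / (s + 1))) with (4 * s / ((s + 1) * (s + 1)))
    by (unfold s; field; nra).
  apply (Rmult_le_reg_r ((s + 1) * (s + 1))). nra.
  unfold Rdiv. rewrite Rmult_assoc, Rinv_l by nra. nra.
Qed.

Lemma reduced_lower E R w eps : 0 <= E -> 0 < eps -> R * R + w * w <= E * E ->
  sqrt (R * R + w * w) + Rabs R <= E + eps + sqrt ((E + eps) * (E + eps) - w * w).
Proof.
  intros HE He HEE.
  assert (sqrt (R * R + w * w) <= E).
  { rewrite <- (sqrt_Rsqr E) by lra. apply sqrt_le_1_alt. unfold Rsqr. lra. }
  assert (Rabs R <= sqrt ((E + eps) * (E + eps) - w * w)).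
  { rewrite <- sqrt_Rsqr_abs. apply sqrt_le_1_alt. unfold Rsqr. nra. }
  lra.
Qed.

Lemma reduced_upper E w eps t : 0 <= E -> 0 < eps -> E <= w + t ->
  E + eps + sqrt ((E + eps) * (E + eps) - w * w) <=
  w + t + eps + sqrt ((w + t + eps) * (w + t + eps) - w * w).
Proof.
  intros. assert (sqrt ((E + eps) * (E + eps) - w * w) <=
                  sqrt ((w + t + eps) * (w + t + eps) - w * w)) by (apply sqrt_le_1_alt; nra).
  lra.
Qed.

Section Transmission.
Variables k2 h h' ur ui ur' ui' : R -> R.
Variables km kp rr ri tr ti I : R.
Hypothesis Hpc : piecewise_continuous k2.
Hypothesis Hkp : 0 < kp.
Hypothesis Hkm : 0 < km.
Hypothesis Hlp : lim_pinf k2 (kp ^ 2).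
Hypothesis Hip : integrable_near_pinf (fun x => k2 x - kp ^ 2).
Hypothesis Him : integrable_near_minf (fun x => k2 x - km ^ 2).
Hypothesis Hhpos : forall x, 0 < h x.
Hypothesis Hhd : forall x, derivable_pt_lim h x (h' x).
Hypothesis Hh'c : continuity h'.
Hypothesis Hur : solution_with k2 ur ur'.
Hypothesis Hui : solution_with k2 ui ui'.
(* [ur + i ui] is [e^{i km x} + r e^{-i km x}] at [-oo] and [tau e^{i kp x}] at
   [+oo], with [r = rr + i ri] and [tau = tr + i ti]. *)
Hypothesis Hur_m : asym (-1) ur (wave km (1 + rr) ri).
Hypothesis Hui_m : asym (-1) ui (wave km ri (1 - rr)).
Hypothesis Hur_p : asym 1 ur (wave kp tr (- ti)).
Hypothesis Hui_p : asym 1 ui (wave kp ti tr).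
Hypothesis HI : improper_integral_R (rate k2 h h') I.

Let w := wronskian ur ui ur' ui' 0.
Let rho := sqrt (rr * rr + ri * ri).
Let X := reduced_energy h ur ui ur' ui'.

Lemma derivatives_at_minf :
  asym (-1) ur' (dwave km (1 + rr) ri) /\ asym (-1) ui' (dwave km ri (1 - rr)).
Proof.
  set (Hg := pc_integrable _ (pc_abs_deviation k2 (km ^ 2) Hpc)).
  pose proof (integrable_near_minf_tails _ Hg Him) as Ht.
  split; eapply (derivative_asymptotics k2 _ _ _ _ _ _ Hg); eauto; lra.
Qed.

Lemma derivatives_at_pinf :
  asym 1 ur' (dwave kp tr (- ti)) /\ asym 1 ui' (dwave kp ti tr).
Proof.
  set (Hg := pc_integrable _ (pc_abs_deviation k2 (kp ^ 2) Hpc)).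
  pose proof (integrable_near_pinf_tails _ Hg Hip) as Ht.
  split; eapply (derivative_asymptotics k2 _ _ _ _ _ _ Hg); eauto; lra.
Qed.

Lemma wronskian_is_const x : ur x * ui' x - ui x * ur' x = w.
Proof. apply (wronskian_const k2 ur ui ur' ui' Hpc Hur Hui x 0). Qed.

Lemma wronskian_at_minf : w = km * (1 - rho * rho).
Proof.
  destruct derivatives_at_minf as [D1 D2].
  rewrite (wronskian_of_waves ur ui ur' ui' (-1) km (1 + rr) ri ri (1 - rr)
             ltac:(lra) Hkm Hur_m D1 Hui_m D2 w wronskian_is_const).
  unfold rho. rewrite sqrt_sqrt by nra. ring.
Qed.

Lemma wronskian_at_pinf : w = kp * (tr * tr + ti * ti).
Proof.
  destruct derivatives_at_pinf as [D1 D2].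
  rewrite (wronskian_of_waves ur ui ur' ui' 1 kp tr (- ti) ti tr
             ltac:(lra) Hkp Hur_p D1 Hui_p D2 w wronskian_is_const).
  ring.
Qed.

Lemma rate_integral_le a b : a <= b ->
  Int (rate k2 h h') (Hrate k2 h h' Hpc Hhpos Hhd Hh'c) a b <= I.
Proof. intros Hab. apply (proj1 HI). exists a, b. split; auto. apply Int_on. Qed.

(* Far left, the flux peaks at [2 km |r|], which forces the reduced energy up to
   [km (1 + |r|)^2]. *)
Lemma reduced_energy_large_at_minf eps eta : 0 < eps -> 0 < eta ->
  exists x, km * ((1 + rho) * (1 + rho)) - eta <= X eps x.
Proof.
  intros Heps Heta. destruct derivatives_at_minf as [D1 D2].
  destruct (flux_peaks ur ui ur' ui' (-1) km (1 + rr) ri ri (1 - rr) ltac:(lra) Hkm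
              Hur_m D1 Hui_m D2 (eta / 2) 0 ltac:(lra)) as [x [_ Hx]].
  exists x.
  assert (Hrho : rho * rho = rr * rr + ri * ri) by (apply sqrt_sqrt; nra).
  assert (Hrho0 : 0 <= rho) by apply sqrt_pos.
  replace (sqrt _) with (2 * rho) in Hx.
  2: { rewrite <- (sqrt_square (2 * rho)) by lra. f_equal.
       replace (2 * rho * (2 * rho)) with (4 * (rho * rho)) by ring. rewrite Hrho. field. }
  fold (flux ur ui ur' ui' x) in Hx.
  pose proof (energy_identity h ur ui ur' ui' Hhpos x) as HE.
  rewrite <- (wronskian_const k2 ur ui ur' ui' Hpc Hur Hui 0 x) in HE. fold w in HE.
  pose proof (reduced_lower _ (flux ur ui ur' ui' x) w eps
                (energy_nonneg h ur ui ur' ui' Hhpos x) Heps ltac:(nra)) as Hlow.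
  assert (Hhyp : km * (1 + rho * rho) - eta / 2 <=
                 sqrt (flux ur ui ur' ui' x * flux ur ui ur' ui' x + w * w)).
  { apply (hypot_lower _ (2 * km * rho)); try nra. rewrite wronskian_at_minf. ring. }
  pose proof (Rle_abs (flux ur ui ur' ui' x)). unfold X, reduced_energy. fold w. nra.
Qed.

Lemma rate_small_far del N : 0 < del -> exists y, N < y /\ rate k2 h h' y < del.
Proof.
  intros Hdel. apply NNPP. intro Hno.
  assert (Hall : forall y, N < y -> del <= rate k2 h h' y).
  { intros y Hy. apply Rnot_lt_le. intro. apply Hno. now exists y. }
  set (L := (Rabs I + 1) / del).
  assert (HL : 0 < L) by (apply Rdiv_lt_0_compat; pose proof (Rabs_pos I); lra).
  pose proof (rate_integral_le (N + 1) (N + 1 + L) ltac:(lra)) as T1.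
  pose proof (Int_lower _ (Hrate k2 h h' Hpc Hhpos Hhd Hh'c) (N + 1) (N + 1 + L) del
                ltac:(lra) (fun z Hz => Hall z ltac:(lra))) as T2.
  replace (del * (N + 1 + L - (N + 1))) with (Rabs I + 1) in T2 by (unfold L; field; lra).
  pose proof (Rle_abs I). lra.
Qed.

(* Far right, [h] is close to [kp] somewhere, and there the energy is close to
   [kp |tau|^2 = w]. *)
Lemma energy_small_at_pinf t N : 0 < t -> exists y, N < y /\ energy h ur ui ur' ui' y <= w + t.
Proof.
  intros Ht. destruct derivatives_at_pinf as [D1 D2].
  destruct (modulus_of_waves ur ui ur' ui' 1 kp tr (- ti) ti tr Hkp Hur_p D1 Hui_p D2
              ltac:(ring) eq_refl) as [Hmod Hmod'].
  set (tau2 := tr * tr + ti * ti). assert (Ht2 : 0 <= tau2) by (unfold tau2; nra).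
  set (C := kp + (1 + tau2) / kp).
  assert (HC : 0 < C)
    by (unfold C; pose proof (Rdiv_lt_0_compat (1 + tau2) kp ltac:(lra) Hkp); lra).
  set (d := Rmin 1 (Rmin (kp / 2) (t / C))).
  assert (Hd : 0 < d)
    by (apply Rmin_pos; [lra | apply Rmin_pos; [lra | apply Rdiv_lt_0_compat; lra]]).
  assert (Hd1 : d <= 1) by apply Rmin_l.
  assert (Hd2 : d <= kp / 2) by (eapply Rle_trans; [apply Rmin_r | apply Rmin_l]).
  assert (HdC : d * C <= t).
  { assert (d <= t / C) by (eapply Rle_trans; [apply Rmin_r | apply Rmin_r]).
    apply (Rmult_le_compat_r C) in H; [|lra].
    unfold Rdiv in H. rewrite Rmult_assoc, Rinv_l in H by lra. lra. }
  assert (Hq : 0 < 1 + / kp) by (pose proof (Rinv_0_lt_compat kp Hkp); lra).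
  set (del := d / (1 + / kp)). assert (Hdel : 0 < del) by (apply Rdiv_lt_0_compat; lra).
  destruct (beyond_both 1 _ _ (asym_bound 1 _ _ Hmod d Hd) (asym_bound 1 _ _ Hmod' d Hd))
    as [N1 HN1].
  destruct (Hlp del Hdel) as [N2 HN2].
  destruct (rate_small_far del (Rmax N (Rmax N1 N2)) Hdel) as [y [Hy Hry]].
  pose proof (Rmax_l N (Rmax N1 N2)). pose proof (Rmax_r N (Rmax N1 N2)).
  pose proof (Rmax_l N1 N2). pose proof (Rmax_r N1 N2).
  exists y. split; [lra|].
  destruct (HN1 y ltac:(lra)) as [Hm1 Hm2].
  replace (tr * tr + - ti * - ti) with tau2 in Hm1, Hm2 by (unfold tau2; ring).
  assert (Hhc : Rabs (h y - kp) <= d).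
  { replace d with (del * (1 + / kp)) by (unfold del; field; lra).
    apply comparison_close with (k2y := k2 y); auto. apply HN2. lra.
    unfold rate in Hry. pose proof (Rabs_pos (h' y / h y)). lra. }
  pose proof (energy_estimate (h y) _ _ kp tau2 d Hkp Ht2 Hd Hd1 Hd2 Hhc
                (Rlt_le _ _ Hm1) (Rlt_le _ _ Hm2)) as HE.
  unfold energy. rewrite wronskian_at_pinf. fold tau2. fold tau2 C in HE. lra.
Qed.

(* Transporting the reduced energy from far left to far right:
   [km (1 + |r|)^2 <= e^I w]. *)
Lemma reflection_bound : km * ((1 + rho) * (1 + rho)) <= exp I * w.
Proof.
  assert (HI0 : 0 <= I)
    by (pose proof (rate_integral_le 0 0 (Rle_refl 0)); rewrite Int_refl in H; lra).
  assert (Hw0 : 0 <= w) by (rewrite wronskian_at_pinf; nra).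
  apply le_of_vanishing_excess; auto.
  { pose proof (exp_ineq1_le I). lra. }
  intros eta t Heta Ht Ht1.
  destruct (reduced_energy_large_at_minf (t / 2) eta ltac:(lra) Heta) as [x Hx].
  destruct (energy_small_at_pinf (t / 2) x ltac:(lra)) as [y [Hxy Hy]].
  pose proof (reduced_energy_transport k2 h h' ur ui ur' ui' Hpc Hhpos Hhd Hh'c Hur Hui
                (t / 2) x y ltac:(lra) ltac:(lra)) as Htr.
  assert (Hexp : exp (Int (rate k2 h h') (Hrate k2 h h' Hpc Hhpos Hhd Hh'c) x y) <= exp I).
  { destruct (rate_integral_le x y ltac:(lra)) as [Hlt|Heq].
    - left. now apply exp_increasing.
    - now rewrite Heq. }
  pose proof (reduced_energy_pos h ur ui ur' ui' Hhpos (t / 2) y ltac:(lra)) as Hpos.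
  pose proof (reduced_upper _ w (t / 2) (t / 2) (energy_nonneg h ur ui ur' ui' Hhpos y)
                ltac:(lra) ltac:(lra)) as Hup.
  replace (w + t / 2 + t / 2) with (w + t) in Hup by field.
  unfold X, reduced_energy in Hx, Htr, Hpos. fold w in Hx, Htr, Hpos.
  assert (0 < exp I) by apply exp_pos. nra.
Qed.

Theorem transmission_bound : kp / km * (tr ^ 2 + ti ^ 2) >= Rsqr (sech (I / 2)).
Proof.
  assert (HT : kp / km * (tr ^ 2 + ti ^ 2) = 1 - rho * rho).
  { apply (Rmult_eq_reg_l km); [|lra].
    replace (km * (kp / km * (tr ^ 2 + ti ^ 2))) with (kp * (tr * tr + ti * ti)) by (field; lra).
    rewrite <- wronskian_at_pinf, wronskian_at_minf. ring. }
  rewrite HT. apply Rle_ge, sech_bound; [apply sqrt_pos|].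
  apply (Rmult_le_reg_l km); auto. pose proof reflection_bound as H.
  rewrite wronskian_at_minf in H. lra.
Qed.
End Transmission.

Theorem mainTheorem5
  (k2 : R -> R) (kp km : R)
  (Hpc : piecewise_continuous k2)
  (Hkp : 0 < kp) (Hkm : 0 < km)
  (Hlp : lim_pinf k2 (kp ^ 2)) (Hlm : lim_minf k2 (km ^ 2))
  (Hip : integrable_near_pinf (fun x => k2 x - kp ^ 2))
  (Him : integrable_near_minf (fun x => k2 x - km ^ 2))
  (ur ui : R -> R) (rr ri tr ti : R)
  (Hur : is_solution k2 ur) (Hui : is_solution k2 ui)
  (Hasm_re : lim_minf (fun x => ur x - (cos (km * x) + rr * cos (km * x) + ri * sin (km * x))) 0)
  (Hasm_im : lim_minf (fun x => ui x - (sin (km * x) + ri * cos (km * x) - rr * sin (km * x))) 0)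
  (Hasp_re : lim_pinf (fun x => ur x - (tr * cos (kp * x) - ti * sin (kp * x))) 0)
  (Hasp_im : lim_pinf (fun x => ui x - (tr * sin (kp * x) + ti * cos (kp * x))) 0)
  (h h' : R -> R)
  (Hhpos : forall x, 0 < h x)
  (Hhd : forall x, derivable_pt_lim h x (h' x))
  (Hh'c : continuity h')
  (I : R)
  (HI : improper_integral_R
          (fun x => Rabs (h' x / h x) + Rabs (k2 x - h x ^ 2) / h x) I) :
  kp / km * (tr ^ 2 + ti ^ 2) >= Rsqr (sech (I / 2)).
Proof.
  destruct Hur as [ur' Hur]. destruct Hui as [ui' Hui].
  assert (Hur_m : asym (-1) ur (wave km (1 + rr) ri))
    by (eapply asym_of_lim_minf; [|exact Hasm_re]; intro; unfold wave; ring).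
  assert (Hui_m : asym (-1) ui (wave km ri (1 - rr)))
    by (eapply asym_of_lim_minf; [|exact Hasm_im]; intro; unfold wave; ring).
  assert (Hur_p : asym 1 ur (wave kp tr (- ti)))
    by (eapply asym_of_lim_pinf; [|exact Hasp_re]; intro; unfold wave; ring).
  assert (Hui_p : asym 1 ui (wave kp ti tr))
    by (eapply asym_of_lim_pinf; [|exact Hasp_im]; intro; unfold wave; ring).
  exact (transmission_bound k2 h h' ur ui ur' ui' km kp rr ri tr ti I Hpc Hkp Hkm Hlp Hip Him
           Hhpos Hhd Hh'c Hur Hui Hur_m Hui_m Hur_p Hui_p HI).
Qed.
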